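(* The compact wedges $\mathcal{S}_0$ and $\mathcal{S}_1$ are homotopy equivalent to the bouquets $\mathcal{WS}_0$ and $\mathcal{WS}_1$, respectively.
   Context: Let $n\ge1$, $\mathcal{S}=S^n$. $\mathcal{S}_0=\bigvee_{j\ge1}\mathcal{S}_0(j)$ is a compact (Hawaiian-earring type) wedge in $\mathbb{R}^{2n+2}$ of countably many copies $\mathcal{S}_0(j)$ of $S^n\times S^n$ at a common basepoint (the origin), factors meeting pairwise only at the basepoint, diameters tending to $0$. $\mathcal{S}_1=\bigvee_{j\ge1}\mathcal{S}_1(j)$ is the analogous compact wedge with $\mathcal{S}_1(1)$ a copy of $S^n$ and $\mathcal{S}_1(j)\cong S^n\times S^n$ for $j\ge2$. $\mathcal{WS}_0$ (resp. $\mathcal{WS}_1$) is the compact subspace of $\mathbb{R}^{2n+2}$ obtained as follows: take an arc $\bar A$ containing points $p_1,p_2,\dots$ in order, converging to an endpoint $p_\infty$ of $\bar A$, with $a_i$ the subarc from $p_i$ to $p_{i+1}$ and $\bar A=\bigcup_i a_i\cup\{p_\infty\}$; at each $p_j$ attach a copy of the factor $\mathcal{S}_0(j)$ (resp. $\mathcal{S}_1(j)$) meeting $\bar A$ only at $p_j$, the attached factors pairwise disjoint and with diameters tending to $0$. *)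

From Stdlib Require Import Reals Lra.
Open Scope R_scope.

(* Points of R^m are modelled as sequences nat -> R; a subset of R^m is a
   predicate whose members vanish at all coordinates >= m. *)
Definition pt := nat -> R.
Definition set := pt -> Prop.

Definition origin : pt := fun _ => 0.

Fixpoint sumsq (k m : nat) (x : pt) : R :=
  match m with
  | O => 0
  | S m' => sumsq k m' x + (x (k + m')%nat) ^ 2
  end.

Definition dist (m : nat) (x y : pt) : R := sqrt (sumsq 0 m (fun i => x i - y i)).

Definition inR (m : nat) (A : set) : Prop :=
  forall x, A x -> forall i, (m <= i)%nat -> x i = 0.

Definition maps_into (A B : set) (f : pt -> pt) : Prop := forall x, A x -> B (f x).

Definition cont_on (a b : nat) (A : set) (f : pt -> pt) : Prop :=
  forall x, A x -> forall eps, 0 < eps -> exists del, 0 < del /\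
    forall y, A y -> dist a x y < del -> dist b (f x) (f y) < eps.

Definition homeomorphic (a : nat) (A : set) (b : nat) (B : set) : Prop :=
  exists f g : pt -> pt,
    maps_into A B f /\ maps_into B A g /\ cont_on a b A f /\ cont_on b a B g /\
    (forall x, A x -> g (f x) = x) /\ (forall y, B y -> f (g y) = y).

Definition cont_homotopy (a b : nat) (A : set) (H : R -> pt -> pt) : Prop :=
  forall t x, 0 <= t <= 1 -> A x -> forall eps, 0 < eps -> exists del, 0 < del /\
    forall s y, 0 <= s <= 1 -> A y -> Rabs (t - s) < del -> dist a x y < del ->
      dist b (H t x) (H s y) < eps.

Definition homotopic_to_id (m : nat) (A : set) (h : pt -> pt) : Prop :=
  exists H : R -> pt -> pt,
    cont_homotopy m m A H /\
    (forall t x, 0 <= t <= 1 -> A x -> A (H t x)) /\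
    (forall x, A x -> H 0 x = h x) /\ (forall x, A x -> H 1 x = x).

Definition homotopy_equivalent (m : nat) (X Y : set) : Prop :=
  exists f g : pt -> pt,
    maps_into X Y f /\ maps_into Y X g /\ cont_on m m X f /\ cont_on m m Y g /\
    homotopic_to_id m X (fun x => g (f x)) /\ homotopic_to_id m Y (fun y => f (g y)).

Definition sphere (n : nat) : set :=
  fun x => (forall i, (n + 1 <= i)%nat -> x i = 0) /\ sumsq 0 (n + 1) x = 1.

Definition sphere_prod (n : nat) : set :=
  fun x => (forall i, (2 * n + 2 <= i)%nat -> x i = 0) /\
           sumsq 0 (n + 1) x = 1 /\ sumsq (n + 1) (n + 1) x = 1.

(* a factor model: ambient dimension and the model subspace *)
Definition factor := (nat * set)%type.

(* factors of S_0: all S^n x S^n (index j : nat stands for paper's j+1) *)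
Definition factors0 (n : nat) (j : nat) : factor := (2 * n + 2, sphere_prod n)%nat.

Definition factors1 (n : nat) (j : nat) : factor :=
  match j with
  | O => (n + 1, sphere n)%nat
  | S _ => (2 * n + 2, sphere_prod n)%nat
  end.

Definition diam_to_zero (m : nat) (P : nat -> set) : Prop :=
  forall eps, 0 < eps -> exists N, forall j, (N <= j)%nat ->
    forall x y, P j x -> P j y -> dist m x y < eps.

(* W is a compact (Hawaiian-earring type) wedge in R^(2n+2) of copies of the
   factors F j at the origin *)
Definition is_wedge (n : nat) (F : nat -> factor) (W : set) : Prop :=
  exists P : nat -> set,
    (forall j, inR (2 * n + 2) (P j)) /\
    (forall j, homeomorphic (2 * n + 2) (P j) (fst (F j)) (snd (F j))) /\
    (forall j, P j origin) /\
    (forall j k x, j <> k -> P j x -> P k x -> x = origin) /\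
    diam_to_zero (2 * n + 2) P /\
    (forall x, W x <-> exists j, P j x).

(* W is the bouquet WS: an arc gamma([0,1]) with points p_j = gamma (t j),
   t 0 = 0 < t 1 < ... -> 1, p_oo = gamma 1 the endpoint, and at each p_j a
   copy of the factor F j attached *)
Definition is_bouquet (n : nat) (F : nat -> factor) (W : set) : Prop :=
  exists (gamma : R -> pt) (t : nat -> R) (P : nat -> set),
    let m := (2 * n + 2)%nat in
    let Abar : set := fun x => exists s, 0 <= s <= 1 /\ x = gamma s in
    (forall s, 0 <= s <= 1 -> forall i, (m <= i)%nat -> gamma s i = 0) /\
    (forall s, 0 <= s <= 1 -> forall eps, 0 < eps -> exists del, 0 < del /\
       forall s', 0 <= s' <= 1 -> Rabs (s - s') < del -> dist m (gamma s) (gamma s') < eps) /\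
    (forall s s', 0 <= s <= 1 -> 0 <= s' <= 1 -> gamma s = gamma s' -> s = s') /\
    t 0%nat = 0 /\ (forall j, t j < t (S j)) /\ Un_cv t 1 /\
    (forall j, inR m (P j)) /\
    (forall j, homeomorphic m (P j) (fst (F j)) (snd (F j))) /\
    (forall j, P j (gamma (t j))) /\
    (forall j x, P j x -> Abar x -> x = gamma (t j)) /\
    (forall j k x, j <> k -> P j x -> P k x -> False) /\
    diam_to_zero m P /\
    (forall x, W x <-> Abar x \/ exists j, P j x).

(* Both spaces are unions of copies of the model spaces M_j (S^n x S^n, or S^n for the first
   factor of S_1): in the wedge the copies P_j share the origin, in the bouquet the copies Q_j
   hang off an arc at the points gamma (T j), which converge to its free end gamma 1.  A model is
   homogeneous (a reflection exchanges any two points), so both copies of M_j may be based at the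
   same point a_j, and it carries a deformation Sg_j t, 1/2 <= t <= 1, from the identity to a map
   collapsing the cap {s_j >= t} around a_j onto a_j.  The map wedge -> bouquet spreads the cap
   {s_j >= 1/2} of P_j along the arc from gamma (T j) towards gamma 1 and sends the rest of P_j
   to Q_j through the collapse; the map bouquet -> wedge crushes the arc to the origin.  Both
   composites are deformed into the identity by letting t run back to 1 (sliding the arc back as
   well), and continuity at the origin and at gamma 1 comes from the diameters of the pieces
   tending to 0. *)

From Stdlib Require Import Reals Lra Lia.
From Stdlib Require Import Classical ClassicalEpsilon FunctionalExtensionality PropExtensionality.
(* Imported after Reals, whose own [dist] it must shadow. *)
Open Scope R_scope.

Fixpoint dot (k m : nat) (x y : pt) : R :=
  match m with
  | O => 0
  | S m' => dot k m' x y + x (k + m')%nat * y (k + m')%nat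
  end.

Lemma sumsq_dot k m x : sumsq k m x = dot k m x x.
Proof. induction m; simpl; [reflexivity | rewrite IHm; ring]. Qed.

Lemma dot_sym k m x y : dot k m x y = dot k m y x.
Proof. induction m; simpl; [reflexivity | rewrite IHm; ring]. Qed.

Lemma dot_linl k m a b x y z :
  dot k m (fun i => a * x i + b * y i) z = a * dot k m x z + b * dot k m y z.
Proof. induction m; simpl; [ring | rewrite IHm; ring]. Qed.

Lemma dot_scall k m c x y : dot k m (fun i => c * x i) y = c * dot k m x y.
Proof. induction m; simpl; [ring | rewrite IHm; ring]. Qed.

Lemma dot_scal2 k m c x : dot k m (fun i => c * x i) (fun i => c * x i) = c * c * dot k m x x.
Proof. induction m; simpl; [ring | rewrite IHm; ring]. Qed.

Lemma dot_expand k m x y a b :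
  dot k m (fun i => a * x i + b * y i) (fun i => a * x i + b * y i) =
  a * a * dot k m x x + 2 * a * b * dot k m x y + b * b * dot k m y y.
Proof. induction m; simpl; [ring | rewrite IHm; ring]. Qed.

Lemma dot_sub_expand k m x y :
  dot k m (fun i => x i - y i) (fun i => x i - y i) = dot k m x x - 2 * dot k m x y + dot k m y y.
Proof. induction m; simpl; [ring | rewrite IHm; ring]. Qed.

Lemma dot_ext k m x x' y y' :
  (forall i, (k <= i < k + m)%nat -> x i = x' i /\ y i = y' i) ->
  dot k m x y = dot k m x' y'.
Proof.
  induction m; intro H; simpl; auto.
  rewrite IHm by (intros; apply H; lia).
  destruct (H (k + m)%nat) as [H1 H2]; [lia |]. rewrite H1, H2; ring.
Qed.

Lemma dot_zero_r k m x y : (forall i, (k <= i < k + m)%nat -> y i = 0) -> dot k m x y = 0.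
Proof.
  induction m; intro H; simpl; auto.
  rewrite IHm by (intros; apply H; lia). rewrite (H (k + m)%nat) by lia. ring.
Qed.

Lemma sumsq_ext k m x x' :
  (forall i, (k <= i < k + m)%nat -> x i = x' i) -> sumsq k m x = sumsq k m x'.
Proof. intro H; rewrite !sumsq_dot; apply dot_ext; intros; split; apply H; auto. Qed.

Lemma sumsq_nonneg k m x : 0 <= sumsq k m x.
Proof. induction m; simpl; [lra |]. pose proof (pow2_ge_0 (x (k + m)%nat)); lra. Qed.

Lemma sumsq_split k a b x : sumsq k (a + b) x = sumsq k a x + sumsq (k + a) b x.
Proof.
  induction b; simpl; [rewrite Nat.add_0_r; ring |].
  rewrite Nat.add_succ_r; simpl. rewrite IHb, Nat.add_assoc. ring.
Qed.

Lemma sumsq_coord_le k m x i : (k <= i < k + m)%nat -> x i ^ 2 <= sumsq k m x.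
Proof.
  induction m; intro Hi; [lia |]. simpl.
  pose proof (sumsq_nonneg k m x). pose proof (pow2_ge_0 (x (k + m)%nat)).
  destruct (Nat.eq_dec i (k + m)%nat) as [-> | Hne]; [lra |].
  pose proof (IHm ltac:(lia)); lra.
Qed.

Lemma sumsq_eq0 k m x : sumsq k m x = 0 -> forall i, (k <= i < k + m)%nat -> x i = 0.
Proof.
  intros H i Hi. pose proof (sumsq_coord_le k m x i Hi). rewrite H in H0. simpl in H0. nra.
Qed.

Lemma dot_self_eq0 k m x : dot k m x x = 0 -> forall i, (k <= i < k + m)%nat -> x i = 0.
Proof. rewrite <- sumsq_dot. apply sumsq_eq0. Qed.

Lemma sumsq_le_total k b d w : (k + b <= d)%nat -> sumsq k b w <= sumsq 0 d w.
Proof.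
  intro H. replace d with (k + (b + (d - k - b)))%nat by lia.
  rewrite !sumsq_split. simpl.
  pose proof (sumsq_nonneg 0 k w). pose proof (sumsq_nonneg (k + b) (d - k - b) w). lra.
Qed.

Lemma abs_coord_le_sqrt_sumsq k b x i :
  (k <= i < k + b)%nat -> Rabs (x i) <= sqrt (sumsq k b x).
Proof.
  intro Hi. rewrite <- sqrt_Rsqr_abs. apply sqrt_le_1_alt. unfold Rsqr.
  pose proof (sumsq_coord_le k b x i Hi). simpl in H. lra.
Qed.

Lemma unit_coord_bound k b x i : dot k b x x = 1 -> (k <= i < k + b)%nat -> -1 <= x i <= 1.
Proof.
  intros H Hi. pose proof (sumsq_coord_le k b x i Hi). rewrite sumsq_dot, H in H0.
  simpl in H0. nra.
Qed.

Lemma dot_cauchy_schwarz k m x y : (dot k m x y) ^ 2 <= dot k m x x * dot k m y y.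
Proof.
  set (A := dot k m x x); set (B := dot k m y y); set (C := dot k m x y).
  assert (HA : 0 <= A) by (unfold A; rewrite <- sumsq_dot; apply sumsq_nonneg).
  assert (Hq : forall l, 0 <= A - 2 * l * C + l * l * B).
  { intro l. pose proof (sumsq_nonneg k m (fun i => 1 * x i + - l * y i)) as H.
    rewrite sumsq_dot, dot_expand in H. fold A B C in H. lra. }
  destruct (Req_dec B 0) as [HB0 | HB0].
  - destruct (Req_dec C 0) as [HC0 | HC0]; [rewrite HC0, HB0; lra | exfalso].
    specialize (Hq ((A + 1) / (2 * C))). rewrite HB0 in Hq.
    replace (A - 2 * ((A + 1) / (2 * C)) * C + (A + 1) / (2 * C) * ((A + 1) / (2 * C)) * 0)
      with (-1) in Hq by (field; auto). lra.
  - assert (HB : 0 < B) by (pose proof (Hq 0); pose proof (sumsq_nonneg k m y);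
      unfold B in *; rewrite sumsq_dot in *; lra).
    specialize (Hq (C / B)).
    replace (A - 2 * (C / B) * C + C / B * (C / B) * B) with ((A * B - C * C) / B) in Hq
      by (field; lra).
    assert (0 <= A * B - C * C).
    { apply Rmult_le_reg_r with (/ B); [apply Rinv_0_lt_compat; lra |]. lra. }
    simpl. lra.
Qed.

Lemma dot_le_sqrt k m x y : dot k m x y <= sqrt (sumsq k m x) * sqrt (sumsq k m y).
Proof.
  rewrite <- sqrt_mult by apply sumsq_nonneg. rewrite !sumsq_dot.
  destruct (Rle_lt_dec (dot k m x y) 0).
  - apply Rle_trans with 0; auto; apply sqrt_pos.
  - rewrite <- (sqrt_pow2 (dot k m x y)) by lra. apply sqrt_le_1_alt. apply dot_cauchy_schwarz.
Qed.

Lemma dist_nonneg m x y : 0 <= dist m x y.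
Proof. apply sqrt_pos. Qed.

Lemma dist_sym m x y : dist m x y = dist m y x.
Proof.
  unfold dist. f_equal. generalize 0%nat. intro k.
  induction m; simpl; auto. rewrite IHm. ring.
Qed.

Lemma dist_refl m x : dist m x x = 0.
Proof.
  unfold dist. rewrite (sumsq_ext 0 m _ (fun _ => 0 * x O)) by (intros; ring).
  rewrite sumsq_dot, dot_scall. rewrite Rmult_0_l. apply sqrt_0.
Qed.

Lemma dist_coord_le m x y i : (i < m)%nat -> Rabs (x i - y i) <= dist m x y.
Proof.
  intro Hi. apply (abs_coord_le_sqrt_sumsq 0 m (fun i => x i - y i)). lia.
Qed.

Lemma dist_triangle m x y z : dist m x z <= dist m x y + dist m y z.
Proof.
  unfold dist.
  set (a := fun i => x i - y i). set (b := fun i => y i - z i).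
  rewrite (sumsq_ext 0 m _ (fun i => 1 * a i + 1 * b i)) by (intros; unfold a, b; ring).
  fold (sumsq 0 m a) (sumsq 0 m b).
  pose proof (sumsq_nonneg 0 m a). pose proof (sumsq_nonneg 0 m b).
  pose proof (dot_le_sqrt 0 m a b).
  pose proof (sqrt_pos (sumsq 0 m a)). pose proof (sqrt_pos (sumsq 0 m b)).
  rewrite <- (sqrt_pow2 (sqrt (sumsq 0 m a) + sqrt (sumsq 0 m b))) by lra.
  apply sqrt_le_1_alt. rewrite sumsq_dot, dot_expand, <- !sumsq_dot.
  replace ((sqrt (sumsq 0 m a) + sqrt (sumsq 0 m b)) ^ 2) with
    (Rsqr (sqrt (sumsq 0 m a)) + Rsqr (sqrt (sumsq 0 m b))
     + 2 * (sqrt (sumsq 0 m a) * sqrt (sumsq 0 m b))) by (unfold Rsqr; ring).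
  rewrite !Rsqr_sqrt by auto. lra.
Qed.

Lemma dist_le_coord_bound m x y e : 0 <= e ->
  (forall i, (i < m)%nat -> Rabs (x i - y i) <= e) -> dist m x y <= (INR m + 1) * e.
Proof.
  intros He H. unfold dist.
  assert (Hs : sumsq 0 m (fun i => x i - y i) <= INR m * e ^ 2).
  { clear -H He. induction m; simpl sumsq; [simpl; lra |]. rewrite S_INR.
    assert (IH := IHm (fun i Hi => H i ltac:(lia))).
    assert (Rabs (x (0 + m)%nat - y (0 + m)%nat) <= e) by (apply H; lia).
    assert ((x (0 + m)%nat - y (0 + m)%nat) ^ 2 <= e ^ 2).
    { rewrite <- pow2_abs. apply pow_incr. split; auto. apply Rabs_pos. }
    simpl in *. lra. }
  pose proof (pos_INR m). pose proof (pow2_ge_0 e).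
  rewrite <- (sqrt_pow2 ((INR m + 1) * e)) by (apply Rmult_le_pos; lra).
  apply sqrt_le_1_alt. apply Rle_trans with (INR m * e ^ 2); auto. simpl. nra.
Qed.

Definition supported (m : nat) (x : pt) : Prop := forall i, (m <= i)%nat -> x i = 0.

Lemma dist_eq0 m x y : dist m x y = 0 -> supported m x -> supported m y -> x = y.
Proof.
  intros H Hx Hy. apply functional_extensionality. intro i.
  destruct (Nat.lt_ge_cases i m) as [Hi | Hi]; [| rewrite Hx, Hy; auto].
  pose proof (dist_coord_le m x y i Hi). rewrite H in H0.
  pose proof (Rabs_pos (x i - y i)).
  destruct (Req_dec (x i - y i) 0); [lra |]. apply Rabs_no_R0 in H2. lra.
Qed.

Section PointwiseContinuity.
Context {X : Type} (d : X -> X -> R) (D : X -> Prop).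

Definition cont_at (f : X -> R) (x : X) : Prop :=
  forall eps, 0 < eps -> exists del, 0 < del /\
    forall y, D y -> d x y < del -> Rabs (f x - f y) < eps.

Definition vcont_at (m : nat) (F : X -> pt) (x : X) : Prop :=
  forall eps, 0 < eps -> exists del, 0 < del /\
    forall y, D y -> d x y < del -> dist m (F x) (F y) < eps.

Lemma cont_at_const c x : cont_at (fun _ => c) x.
Proof. intros e He. exists 1. split; [lra |]. intros. rewrite Rminus_diag, Rabs_R0. auto. Qed.

Lemma cont_at_plus f g x : cont_at f x -> cont_at g x -> cont_at (fun y => f y + g y) x.
Proof.
  intros Hf Hg e He.
  destruct (Hf (e / 2) ltac:(lra)) as [d1 [Hd1 H1]].
  destruct (Hg (e / 2) ltac:(lra)) as [d2 [Hd2 H2]].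
  exists (Rmin d1 d2). split; [apply Rmin_pos; auto |].
  intros y Dy Hy. pose proof (Rmin_l d1 d2). pose proof (Rmin_r d1 d2).
  specialize (H1 y Dy ltac:(lra)). specialize (H2 y Dy ltac:(lra)).
  replace (f x + g x - (f y + g y)) with ((f x - f y) + (g x - g y)) by ring.
  eapply Rle_lt_trans; [apply Rabs_triang | lra].
Qed.

Lemma cont_at_opp f x : cont_at f x -> cont_at (fun y => - f y) x.
Proof.
  intros Hf e He. destruct (Hf e He) as [d1 [Hd1 H1]]. exists d1. split; auto.
  intros y Dy Hy. replace (- f x - - f y) with (- (f x - f y)) by ring. rewrite Rabs_Ropp. auto.
Qed.

Lemma cont_at_minus f g x : cont_at f x -> cont_at g x -> cont_at (fun y => f y - g y) x.
Proof. intros. apply (cont_at_plus f (fun y => - g y)); auto. apply cont_at_opp; auto. Qed.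

Lemma cont_at_mult f g x : cont_at f x -> cont_at g x -> cont_at (fun y => f y * g y) x.
Proof.
  intros Hf Hg e He.
  set (A := Rabs (f x) + 1). set (B := Rabs (g x) + 1).
  assert (HA : 0 < A) by (unfold A; pose proof (Rabs_pos (f x)); lra).
  assert (HB : 0 < B) by (unfold B; pose proof (Rabs_pos (g x)); lra).
  destruct (Hf (e / (2 * B)) ltac:(apply Rdiv_lt_0_compat; lra)) as [d1 [Hd1 H1]].
  destruct (Hg (Rmin 1 (e / (2 * A)))
              ltac:(apply Rmin_pos; [lra | apply Rdiv_lt_0_compat; lra])) as [d2 [Hd2 H2]].
  exists (Rmin d1 d2). split; [apply Rmin_pos; auto |].
  intros y Dy Hy. pose proof (Rmin_l d1 d2). pose proof (Rmin_r d1 d2).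
  specialize (H1 y Dy ltac:(lra)). specialize (H2 y Dy ltac:(lra)).
  pose proof (Rmin_l 1 (e / (2 * A))). pose proof (Rmin_r 1 (e / (2 * A))).
  replace (f x * g x - f y * g y) with (f x * (g x - g y) + g y * (f x - f y)) by ring.
  eapply Rle_lt_trans; [apply Rabs_triang |]. rewrite !Rabs_mult.
  assert (Hgy : Rabs (g y) <= B).
  { unfold B. replace (g y) with (g x - (g x - g y)) by ring.
    eapply Rle_trans; [apply Rabs_triang |]. rewrite Rabs_Ropp. lra. }
  assert (E1 : Rabs (f x) * Rabs (g x - g y) <= Rabs (f x) * (e / (2 * A))).
  { apply Rmult_le_compat_l; [apply Rabs_pos | lra]. }
  assert (E2 : Rabs (g y) * Rabs (f x - f y) <= B * (e / (2 * B))).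
  { apply Rmult_le_compat; try apply Rabs_pos; lra. }
  assert (E3 : Rabs (f x) * (e / (2 * A)) < e / 2).
  { unfold A in *. apply Rmult_lt_reg_r with (2 * (Rabs (f x) + 1)); [lra |].
    field_simplify; lra. }
  assert (E4 : B * (e / (2 * B)) = e / 2) by (field; lra).
  lra.
Qed.

Lemma cont_at_inv f x : f x <> 0 -> cont_at f x -> cont_at (fun y => / f y) x.
Proof.
  intros Hx Hf e He.
  set (c := Rabs (f x)). assert (Hc : 0 < c) by (apply Rabs_pos_lt; auto).
  assert (Hp : 0 < Rmin (c / 2) (e * c * c / 2)).
  { apply Rmin_pos; [lra |]. assert (0 < e * c * c) by (repeat apply Rmult_lt_0_compat; lra).
    lra. }
  destruct (Hf _ Hp) as [d1 [Hd1 H1]].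
  exists d1. split; auto. intros y Dy Hy. specialize (H1 y Dy Hy).
  pose proof (Rmin_l (c / 2) (e * c * c / 2)). pose proof (Rmin_r (c / 2) (e * c * c / 2)).
  assert (Hfy : c / 2 <= Rabs (f y)).
  { unfold c in *. replace (f y) with (f x - (f x - f y)) by ring.
    pose proof (Rabs_triang_inv (f x) (f x - f y)). lra. }
  assert (Hfy0 : f y <> 0) by (intro E; rewrite E, Rabs_R0 in Hfy; lra).
  replace (/ f x - / f y) with ((f y - f x) / (f x * f y)) by (field; auto).
  unfold Rdiv. rewrite Rabs_mult, Rabs_inv, Rabs_mult. fold c.
  replace (f y - f x) with (- (f x - f y)) by ring. rewrite Rabs_Ropp.
  apply Rmult_lt_reg_r with (c * Rabs (f y)); [apply Rmult_lt_0_compat; lra |].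
  rewrite Rmult_assoc, Rinv_l by (apply Rgt_not_eq; apply Rmult_lt_0_compat; lra).
  assert (e * c * c / 2 <= e * (c * Rabs (f y))).
  { replace (e * c * c / 2) with (e * (c * (c / 2))) by field.
    apply Rmult_le_compat_l; [lra |]. apply Rmult_le_compat_l; lra. }
  lra.
Qed.

Lemma cont_at_div f g x :
  g x <> 0 -> cont_at f x -> cont_at g x -> cont_at (fun y => f y / g y) x.
Proof. intros. unfold Rdiv. apply (cont_at_mult f (fun y => / g y)); auto. apply cont_at_inv; auto. Qed.

Lemma cont_at_max f g x : cont_at f x -> cont_at g x -> cont_at (fun y => Rmax (f y) (g y)) x.
Proof.
  intros Hf Hg e He.
  destruct (Hf e He) as [d1 [Hd1 H1]]. destruct (Hg e He) as [d2 [Hd2 H2]].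
  exists (Rmin d1 d2). split; [apply Rmin_pos; auto |].
  intros y Dy Hy. pose proof (Rmin_l d1 d2). pose proof (Rmin_r d1 d2).
  specialize (H1 y Dy ltac:(lra)). specialize (H2 y Dy ltac:(lra)).
  revert H1 H2. unfold Rmax, Rabs. repeat (destruct Rle_dec); repeat (destruct Rcase_abs); lra.
Qed.

Lemma cont_at_min f g x : cont_at f x -> cont_at g x -> cont_at (fun y => Rmin (f y) (g y)) x.
Proof.
  intros Hf Hg e He.
  destruct (Hf e He) as [d1 [Hd1 H1]]. destruct (Hg e He) as [d2 [Hd2 H2]].
  exists (Rmin d1 d2). split; [apply Rmin_pos; auto |].
  intros y Dy Hy. pose proof (Rmin_l d1 d2). pose proof (Rmin_r d1 d2).
  specialize (H1 y Dy ltac:(lra)). specialize (H2 y Dy ltac:(lra)).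
  revert H1 H2. unfold Rmin, Rabs. repeat (destruct Rle_dec); repeat (destruct Rcase_abs); lra.
Qed.

Lemma cont_at_sqrt f x : 0 <= f x -> cont_at f x -> cont_at (fun y => sqrt (f y)) x.
Proof.
  intros Hpos Hf e He. destruct (continuity_pt_sqrt (f x) Hpos e He) as [a [Ha H]].
  destruct (Hf a Ha) as [d1 [Hd1 H1]]. exists d1. split; auto.
  intros y Dy Hy. specialize (H1 y Dy Hy).
  destruct (Req_dec (f y) (f x)) as [E | E]; [rewrite E, Rminus_diag, Rabs_R0; auto |].
  assert (Hc : D_x no_cond (f x) (f y) /\ R_dist (f y) (f x) < a).
  { split; [split; [exact I | auto] |]. unfold R_dist. rewrite Rabs_minus_sym. auto. }
  assert (Hd := H (f y) Hc). simpl in Hd. unfold R_dist in Hd. rewrite Rabs_minus_sym. auto.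
Qed.

Lemma cont_at_ext f g x : (forall y, D y -> f y = g y) -> D x -> cont_at g x -> cont_at f x.
Proof.
  intros E Dx H e He. destruct (H e He) as [d1 [Hd1 H1]]. exists d1; split; auto.
  intros. rewrite !E; auto.
Qed.

Lemma vcont_at_ext m F G x :
  (forall y, D y -> F y = G y) -> D x -> vcont_at m G x -> vcont_at m F x.
Proof.
  intros E Dx H e He. destruct (H e He) as [d1 [Hd1 H1]]. exists d1; split; auto.
  intros. rewrite !E; auto.
Qed.

Lemma vcont_at_coord m F x i : (i < m)%nat -> vcont_at m F x -> cont_at (fun y => F y i) x.
Proof.
  intros Hi H e He. destruct (H e He) as [d1 [Hd1 H1]]. exists d1; split; auto.
  intros y Dy Hy. apply Rle_lt_trans with (dist m (F x) (F y)); [apply dist_coord_le | apply H1]; auto.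
Qed.

Lemma vcont_at_const m (c : pt) x : vcont_at m (fun _ => c) x.
Proof. intros e He. exists 1. split; [lra |]. intros. rewrite dist_refl. auto. Qed.

Lemma radius_min_finite (N : nat) (P : nat -> R -> Prop) :
  (forall k a b, 0 < a <= b -> P k b -> P k a) ->
  (forall k, (k < N)%nat -> exists del, 0 < del /\ P k del) ->
  exists del, 0 < del /\ forall k, (k < N)%nat -> P k del.
Proof.
  intros Hmono. induction N; intro H.
  - exists 1. split; [lra |]. intros; lia.
  - destruct IHN as [d1 [Hd1 H1]]; [intros; apply H; lia |].
    destruct (H N ltac:(lia)) as [d2 [Hd2 H2]].
    exists (Rmin d1 d2). split; [apply Rmin_pos; auto |].
    intros k Hk. pose proof (Rmin_l d1 d2). pose proof (Rmin_r d1 d2).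
    pose proof (Rmin_pos d1 d2 Hd1 Hd2).
    destruct (Nat.eq_dec k N) as [-> | Hne].
    + apply Hmono with d2; [lra | auto].
    + apply Hmono with d1; [lra |]. apply H1; lia.
Qed.

Lemma vcont_at_of_coords m F x :
  (forall i, (i < m)%nat -> cont_at (fun y => F y i) x) -> vcont_at m F x.
Proof.
  intros H e He.
  set (e' := e / (2 * (INR m + 1))). pose proof (pos_INR m).
  assert (He' : 0 < e') by (apply Rdiv_lt_0_compat; lra).
  destruct (radius_min_finite m
              (fun i del => forall y, D y -> d x y < del -> Rabs (F x i - F y i) < e'))
    as [del [Hdel Hall]].
  { intros k a b Hab Hb y Dy Hy. apply Hb; auto; lra. }
  { intros k Hk. apply (H k Hk e' He'). }
  exists del. split; auto. intros y Dy Hy.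
  eapply Rle_lt_trans; [apply (dist_le_coord_bound m (F x) (F y) e'); [lra |] |].
  - intros i Hi. left. apply Hall; auto.
  - unfold e'. replace ((INR m + 1) * (e / (2 * (INR m + 1)))) with (e / 2) by (field; lra). lra.
Qed.

Lemma cont_at_dot k m (F G : X -> pt) x :
  (forall i, (k <= i < k + m)%nat -> cont_at (fun y => F y i) x /\ cont_at (fun y => G y i) x) ->
  cont_at (fun y => dot k m (F y) (G y)) x.
Proof.
  induction m; intro H; simpl; [apply cont_at_const |].
  apply (cont_at_plus (fun y => dot k m (F y) (G y))); [apply IHm; intros; apply H; lia |].
  destruct (H (k + m)%nat ltac:(lia)). apply (cont_at_mult (fun y => F y (k + m)%nat)); auto.
Qed.

Lemma cont_at_pow2 f x : cont_at f x -> cont_at (fun y => f y ^ 2) x.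
Proof.
  intros H e He. destruct (cont_at_mult f f x H H e He) as [del [Hdel Hd]].
  exists del; split; auto. intros y Dy Hy.
  replace (f x ^ 2 - f y ^ 2) with (f x * f x - f y * f y) by ring. auto.
Qed.

End PointwiseContinuity.

Lemma cont_at_restrict {X} (d : X -> X -> R) (D D' : X -> Prop) f x :
  (forall y, D' y -> D y) -> cont_at d D f x -> cont_at d D' f x.
Proof. intros S H e He. destruct (H e He) as [d1 [Hd1 H1]]. exists d1; split; auto. Qed.

Section Composition.
Context {X Y : Type} (dX : X -> X -> R) (D : X -> Prop) (dY : Y -> Y -> R) (E : Y -> Prop).
Variables (F : X -> Y) (x : X).
Hypothesis HF : forall e, 0 < e -> exists del, 0 < del /\
  forall y, D y -> dX x y < del -> dY (F x) (F y) < e.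
Hypothesis HFE : forall y, D y -> E (F y).

Lemma vcont_at_comp m (G : Y -> pt) :
  vcont_at dY E m G (F x) -> vcont_at dX D m (fun y => G (F y)) x.
Proof.
  intros HG e He. destruct (HG e He) as [d1 [Hd1 H1]].
  destruct (HF d1 Hd1) as [d2 [Hd2 H2]]. exists d2; split; auto.
Qed.

Lemma cont_at_comp (G : Y -> R) :
  cont_at dY E G (F x) -> cont_at dX D (fun y => G (F y)) x.
Proof.
  intros HG e He. destruct (HG e He) as [d1 [Hd1 H1]].
  destruct (HF d1 Hd1) as [d2 [Hd2 H2]]. exists d2; split; auto.
Qed.

End Composition.

Definition dist_real (s t : R) : R := Rabs (s - t).

Definition dist_prod (m : nat) (p q : R * pt) : R :=
  Rmax (Rabs (fst p - fst q)) (dist m (snd p) (snd q)).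

Lemma dist_prod_fst m p q : Rabs (fst p - fst q) <= dist_prod m p q.
Proof. apply Rmax_l. Qed.

Lemma dist_prod_snd m p q : dist m (snd p) (snd q) <= dist_prod m p q.
Proof. apply Rmax_r. Qed.

Lemma cont_at_fst m (D : R * pt -> Prop) p : cont_at (dist_prod m) D fst p.
Proof.
  intros e He. exists e; split; auto. intros q Dq Hq.
  pose proof (dist_prod_fst m p q). lra.
Qed.

Lemma vcont_at_snd m (D : R * pt -> Prop) p : vcont_at (dist_prod m) D m snd p.
Proof.
  intros e He. exists e; split; auto. intros q Dq Hq.
  pose proof (dist_prod_snd m p q). lra.
Qed.

Lemma vcont_at_id m (D : set) x : vcont_at (dist m) D m (fun y => y) x.
Proof. intros e He. exists e; split; auto. Qed.

Lemma cont_at_coord m (D : set) x i : (i < m)%nat -> cont_at (dist m) D (fun y => y i) x.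
Proof. intro Hi. apply (vcont_at_coord (dist m) D m (fun y => y) x i Hi). apply vcont_at_id. Qed.

Lemma dist_prod_pair_cont {X} (d : X -> X -> R) (D : X -> Prop) (f : X -> R) (G : X -> pt) k x :
  cont_at d D f x -> vcont_at d D k G x ->
  forall e, 0 < e -> exists del, 0 < del /\
    forall y, D y -> d x y < del -> dist_prod k (f x, G x) (f y, G y) < e.
Proof.
  intros Hf HG e He. destruct (Hf e He) as [d1 [Hd1 H1]]. destruct (HG e He) as [d3 [Hd3 H3]].
  exists (Rmin d1 d3). split; [apply Rmin_pos; auto |]. intros y Dy Hy.
  pose proof (Rmin_l d1 d3). pose proof (Rmin_r d1 d3).
  unfold dist_prod. simpl. apply Rmax_lub_lt; [apply H1 | apply H3]; auto; lra.
Qed.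

Lemma cont_on_comp a b c A B f g :
  cont_on a b A f -> maps_into A B f -> cont_on b c B g -> cont_on a c A (fun x => g (f x)).
Proof.
  intros Hf HAB Hg x Ax e He. destruct (Hg (f x) (HAB x Ax) e He) as [d1 [Hd1 H1]].
  destruct (Hf x Ax d1 Hd1) as [d0 [Hd0 H0]]. exists d0. split; auto.
Qed.

Lemma vcont_at_glue2 {X} (d : X -> X -> R) (D C1 C2 : X -> Prop) m F x :
  (exists del, 0 < del /\ forall y, D y -> d x y < del -> C1 y \/ C2 y) ->
  vcont_at d (fun y => D y /\ C1 y) m F x -> vcont_at d (fun y => D y /\ C2 y) m F x ->
  vcont_at d D m F x.
Proof.
  intros [d0 [Hd0 H0]] H1 H2 e He.
  destruct (H1 e He) as [d1 [Hd1 K1]]. destruct (H2 e He) as [d2 [Hd2 K2]].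
  exists (Rmin d0 (Rmin d1 d2)). split; [repeat apply Rmin_pos; auto |].
  intros y Dy Hy. pose proof (Rmin_l d0 (Rmin d1 d2)). pose proof (Rmin_r d0 (Rmin d1 d2)).
  pose proof (Rmin_l d1 d2). pose proof (Rmin_r d1 d2).
  destruct (H0 y Dy ltac:(lra)); [apply K1 | apply K2]; auto; lra.
Qed.

Lemma vcont_at_if {X} (d : X -> X -> R) (D : X -> Prop) m (g : X -> R) (B1 B2 : X -> pt) x :
  D x -> cont_at d D g x -> vcont_at d D m B1 x -> vcont_at d D m B2 x ->
  (g x = 0 -> B1 x = B2 x) ->
  vcont_at d D m (fun y => if Rle_dec 0 (g y) then B1 y else B2 y) x.
Proof.
  intros Dx Hg H1 H2 Heq e He.
  destruct (H1 e He) as [d1 [Hd1 K1]]. destruct (H2 e He) as [d2 [Hd2 K2]].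
  destruct (Rtotal_order (g x) 0) as [Hlt | [Heq0 | Hgt]].
  - destruct (Hg (- g x) ltac:(lra)) as [d3 [Hd3 K3]].
    exists (Rmin d2 d3). split; [apply Rmin_pos; auto |].
    intros y Dy Hy. pose proof (Rmin_l d2 d3). pose proof (Rmin_r d2 d3).
    specialize (K3 y Dy ltac:(lra)). apply Rabs_def2 in K3.
    destruct Rle_dec; [lra |]. destruct Rle_dec; [lra |]. apply K2; auto; lra.
  - specialize (Heq Heq0).
    exists (Rmin d1 d2). split; [apply Rmin_pos; auto |].
    intros y Dy Hy. pose proof (Rmin_l d1 d2). pose proof (Rmin_r d1 d2).
    destruct (Rle_dec 0 (g x)); [| lra].
    destruct Rle_dec; [apply K1; auto; lra |]. rewrite Heq. apply K2; auto; lra.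
  - destruct (Hg (g x) ltac:(lra)) as [d3 [Hd3 K3]].
    exists (Rmin d1 d3). split; [apply Rmin_pos; auto |].
    intros y Dy Hy. pose proof (Rmin_l d1 d3). pose proof (Rmin_r d1 d3).
    specialize (K3 y Dy ltac:(lra)). apply Rabs_def2 in K3.
    destruct Rle_dec; [| lra]. destruct Rle_dec; [| lra]. apply K1; auto; lra.
Qed.

Lemma inv_succ_pos k : 0 < / (INR k + 1).
Proof. apply Rinv_0_lt_compat. pose proof (pos_INR k); lra. Qed.

Lemma inv_succ_lt e : 0 < e -> exists N, forall k, (N <= k)%nat -> / (INR k + 1) < e.
Proof.
  intro He. destruct (INR_archimed e 1 He) as [N HN]. exists N. intros k Hk.
  apply le_INR in Hk. pose proof (pos_INR N).
  apply Rmult_lt_reg_r with (INR k + 1); [lra |]. rewrite Rinv_l by lra. nra.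
Qed.

Definition strict_incr (phi : nat -> nat) : Prop := forall k, (phi k < phi (S k))%nat.

Lemma strict_incr_mono phi : strict_incr phi -> forall k k', (k <= k')%nat -> (phi k <= phi k')%nat.
Proof. intros H k k' Hk. induction Hk; auto. specialize (H m). lia. Qed.

Lemma strict_incr_ge phi : strict_incr phi -> forall k, (k <= phi k)%nat.
Proof. intros H k. induction k; [lia |]. specialize (H k). lia. Qed.

Lemma strict_incr_comp phi psi :
  strict_incr phi -> strict_incr psi -> strict_incr (fun k => phi (psi k)).
Proof.
  intros Hp Hq k. specialize (Hq k).
  pose proof (strict_incr_mono phi Hp (S (psi k)) (psi (S k)) Hq). specialize (Hp (psi k)). lia.
Qed.

Lemma Un_cv_subseq u l psi : Un_cv u l -> strict_incr psi -> Un_cv (fun k => u (psi k)) l.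
Proof.
  intros H Hp e He. destruct (H e He) as [N HN]. exists N. intros k Hk.
  apply HN. pose proof (strict_incr_ge psi Hp k). lia.
Qed.

Lemma Un_cv_const_eq c l : Un_cv (fun _ => c) l -> l = c.
Proof.
  intro H. apply UL_sequence with (fun _ : nat => c); auto.
  intros e He. exists O. intros. unfold R_dist. rewrite Rminus_diag, Rabs_R0; auto.
Qed.

Lemma Un_cv_dot k m (z w : nat -> pt) L W :
  (forall i, (k <= i < k + m)%nat -> Un_cv (fun j => z j i) (L i) /\ Un_cv (fun j => w j i) (W i)) ->
  Un_cv (fun j => dot k m (z j) (w j)) (dot k m L W).
Proof.
  induction m; intro H; simpl.
  - intros e He. exists O. intros. unfold R_dist. rewrite Rminus_diag, Rabs_R0; auto.
  - apply CV_plus; [apply IHm; intros; apply H; lia |].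
    destruct (H (k + m)%nat ltac:(lia)). apply CV_mult; auto.
Qed.

(* Stdlib's [Bolzano_Weierstrass] only provides an adherence value. *)
Lemma bounded_cv_subseq (u : nat -> R) a b : (forall k, a <= u k <= b) ->
  exists phi l, strict_incr phi /\ a <= l <= b /\ Un_cv (fun k => u (phi k)) l.
Proof.
  intro Hu.
  destruct (Bolzano_Weierstrass u (fun c => a <= c <= b) (compact_P3 a b) Hu) as [l Hl].
  assert (Hex : forall p : nat * nat,
             exists q, (fst p <= q)%nat /\ Rabs (u q - l) < / (INR (snd p) + 1)).
  { intros [N k]. simpl.
    destruct (Hl (disc l (mkposreal _ (inv_succ_pos k))) N) as [q [Hq1 Hq2]].
    - exists (mkposreal _ (inv_succ_pos k)). intros y Hy; auto.
    - exists q. split; auto. }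
  destruct (choice _ Hex) as [nx Hnx].
  set (phi := fix phi k := match k with O => nx (O, O) | S k' => nx (S (phi k'), S k') end).
  assert (Hphi : forall k, Rabs (u (phi k) - l) < / (INR k + 1)).
  { intros [| k]; [exact (proj2 (Hnx (O, O))) | exact (proj2 (Hnx (S (phi k), S k)))]. }
  assert (Hsub : strict_incr phi).
  { intro k. change (phi (S k)) with (nx (S (phi k), S k)).
    pose proof (proj1 (Hnx (S (phi k), S k))). simpl in H. lia. }
  assert (Hcv : Un_cv (fun k => u (phi k)) l).
  { intros e He. destruct (inv_succ_lt e He) as [N HN]. exists N. intros k Hk.
    unfold R_dist. specialize (Hphi k). specialize (HN k Hk). lra. }
  assert (Hconst : forall c, Un_cv (fun _ => c) c).
  { intros c e He. exists O. intros. unfold R_dist. rewrite Rminus_diag, Rabs_R0; auto. }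
  exists phi, l. split; [| split]; auto. split.
  - apply Rle_cv_lim with (fun _ => a) (fun k => u (phi k)); auto. intro; apply Hu.
  - apply Rle_cv_lim with (fun k => u (phi k)) (fun _ => b); auto. intro; apply Hu.
Qed.

Definition vcv (m : nat) (z : nat -> pt) (L : pt) : Prop :=
  forall e, 0 < e -> exists N, forall k, (N <= k)%nat -> dist m (z k) L < e.

Lemma rank_max_finite (m : nat) (P : nat -> nat -> Prop) :
  (forall i N N', (N <= N')%nat -> P i N -> P i N') ->
  (forall i, (i < m)%nat -> exists N, P i N) -> exists N, forall i, (i < m)%nat -> P i N.
Proof.
  intros Hm. induction m; intro H; [exists O; intros; lia |].
  destruct IHm as [N1 H1]; [intros; apply H; lia |].
  destruct (H m ltac:(lia)) as [N2 H2].
  exists (Nat.max N1 N2). intros i Hi.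
  destruct (Nat.eq_dec i m) as [-> | Hne].
  - apply Hm with N2; auto; lia.
  - apply Hm with N1; [lia |]. apply H1; lia.
Qed.

Lemma vcv_of_coords m z L :
  (forall i, (i < m)%nat -> Un_cv (fun k => z k i) (L i)) -> vcv m z L.
Proof.
  intros H e He.
  set (e' := e / (2 * (INR m + 1))). pose proof (pos_INR m).
  assert (He' : 0 < e') by (apply Rdiv_lt_0_compat; lra).
  destruct (rank_max_finite m (fun i N => forall k, (N <= k)%nat -> Rabs (z k i - L i) < e'))
    as [N HN].
  { intros i N N' HNN' HP k Hk. apply HP. lia. }
  { intros i Hi. destruct (H i Hi e' He') as [N HN]. exists N. apply HN. }
  exists N. intros k Hk. eapply Rle_lt_trans; [apply (dist_le_coord_bound m (z k) L e'); [lra |] |].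
  - intros i Hi. left. apply HN; auto.
  - unfold e'. replace ((INR m + 1) * (e / (2 * (INR m + 1)))) with (e / 2) by (field; lra). lra.
Qed.

Lemma vcv_unique m z L L' : vcv m z L -> vcv m z L' -> dist m L L' = 0.
Proof.
  intros H1 H2. pose proof (dist_nonneg m L L').
  destruct (Req_dec (dist m L L') 0); auto. exfalso.
  set (r := dist m L L').
  destruct (H1 (r / 2) ltac:(unfold r; lra)) as [N1 HN1].
  destruct (H2 (r / 2) ltac:(unfold r; lra)) as [N2 HN2].
  specialize (HN1 (Nat.max N1 N2) ltac:(lia)). specialize (HN2 (Nat.max N1 N2) ltac:(lia)).
  pose proof (dist_triangle m L (z (Nat.max N1 N2)) L').
  rewrite (dist_sym m L (z _)) in H3. fold r in H3. lra.
Qed.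

Lemma vcv_comp {X} (d : X -> X -> R) m (E : X -> Prop) (z : nat -> X) (L : X) (G : X -> pt) :
  (forall e, 0 < e -> exists N, forall k, (N <= k)%nat -> d L (z k) < e) ->
  (forall k, E (z k)) -> vcont_at d E m G L -> vcv m (fun k => G (z k)) (G L).
Proof.
  intros Hz HE HG e He. destruct (HG e He) as [del [Hdel H]].
  destruct (Hz del Hdel) as [N HN]. exists N. intros k Hk. rewrite dist_sym. apply H; auto.
Qed.

Definition seq_closed (m : nat) (C : set) : Prop :=
  forall y x, (forall k, C (y k)) -> vcv m y x -> supported m x -> C x.

Definition seq_compact (m : nat) (M : set) : Prop :=
  forall z, (forall k, M (z k)) ->
    exists phi L, strict_incr phi /\ M L /\ vcv m (fun k => z (phi k)) L.

Lemma bounded_vec_cv_subseq m (z : nat -> pt) :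
  (forall k i, (i < m)%nat -> -1 <= z k i <= 1) ->
  exists phi L, strict_incr phi /\ (forall i, (i < m)%nat -> Un_cv (fun k => z (phi k) i) (L i)).
Proof.
  induction m; intro Hb.
  - exists (fun k => k), (fun _ => 0). split; [intro; lia | intros; lia].
  - destruct IHm as [phi [L [Hphi HL]]]; [intros; apply Hb; lia |].
    destruct (bounded_cv_subseq (fun k => z (phi k) m) (-1) 1) as [psi [l [Hpsi [_ Hl]]]].
    { intro k; apply Hb; lia. }
    exists (fun k => phi (psi k)), (fun i => if Nat.eq_dec i m then l else L i).
    split; [apply strict_incr_comp; auto |].
    intros i Hi. destruct (Nat.eq_dec i m) as [-> | Hne]; auto.
    apply (Un_cv_subseq (fun k => z (phi k) i)); auto. apply HL; lia.
Qed.

Lemma seq_compact_of_bounded_closed m (M : set) :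
  (forall x, M x -> supported m x /\ forall i, (i < m)%nat -> -1 <= x i <= 1) ->
  (forall z L, (forall k, M (z k)) -> (forall i, (i < m)%nat -> Un_cv (fun k => z k i) (L i)) ->
      supported m L -> M L) ->
  seq_compact m M.
Proof.
  intros Hb Hc z Hz.
  destruct (bounded_vec_cv_subseq m z) as [phi [L [Hphi HL]]].
  { intros k i Hi. apply (proj2 (Hb _ (Hz k))); auto. }
  set (L' := fun i => if Compare_dec.lt_dec i m then L i else 0).
  assert (HL' : forall i, (i < m)%nat -> Un_cv (fun k => z (phi k) i) (L' i)).
  { intros i Hi. unfold L'. destruct Compare_dec.lt_dec; [auto | lia]. }
  exists phi, L'. split; [| split]; auto.
  - apply (Hc (fun k => z (phi k))); auto.
    intros i Hi. unfold L'. destruct Compare_dec.lt_dec; auto; lia.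
  - apply vcv_of_coords; auto.
Qed.

Lemma seq_closed_homeo_image m d (M Q : set) psi psinv :
  seq_compact d M -> maps_into Q M psi -> maps_into M Q psinv -> cont_on d m M psinv ->
  (forall y, Q y -> psinv (psi y) = y) -> inR m Q -> seq_closed m Q.
Proof.
  intros Hc H1 H2 H3 H4 H5 y x Hy Hyx Hx.
  destruct (Hc (fun k => psi (y k))) as [phi [L [Hphi [HL HconvL]]]]; [intro k; apply H1; auto |].
  assert (Hc1 : vcv m (fun k => psinv (psi (y (phi k)))) (psinv L)).
  { apply (vcv_comp (dist d) m M (fun k => psi (y (phi k))) L psinv).
    - intros e He. destruct (HconvL e He) as [N HN]. exists N. intros. rewrite dist_sym. auto.
    - intro k. apply H1; auto.
    - intros e He. apply (H3 L HL e He). }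
  assert (Hc2 : vcv m (fun k => psinv (psi (y (phi k)))) x).
  { intros e He. destruct (Hyx e He) as [N HN]. exists N. intros k Hk.
    rewrite H4 by auto. apply HN. pose proof (strict_incr_ge phi Hphi k). lia. }
  assert (x = psinv L) by (apply (dist_eq0 m); [apply (vcv_unique _ _ _ _ Hc2 Hc1) | auto | exact (H5 _ (H2 L HL))]).
  subst x. apply H2; auto.
Qed.

Lemma seq_closed_dist_pos m (C : set) x : seq_closed m C -> ~ C x -> supported m x ->
  exists del, 0 < del /\ forall y, C y -> del <= dist m x y.
Proof.
  intros Hc Hx Hv. apply NNPP. intro Hn.
  assert (Hall : forall k : nat, exists y, C y /\ dist m x y < / (INR k + 1)).
  { intro k. apply NNPP. intro Hk. apply Hn. exists (/ (INR k + 1)).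
    split; [apply inv_succ_pos |].
    intros y Cy. destruct (Rle_lt_dec (/ (INR k + 1)) (dist m x y)); auto.
    exfalso; apply Hk; eauto. }
  destruct (choice _ Hall) as [y Hy]. apply Hx.
  apply (Hc y x); auto; [intro k; apply Hy |].
  intros e He. destruct (inv_succ_lt e He) as [N HN]. exists N. intros k Hk.
  rewrite dist_sym. specialize (HN k Hk). destruct (Hy k). lra.
Qed.

Lemma dist_pos_shrinking_family m (C : nat -> set) (p : pt) (e : nat -> pt) x :
  (forall k, seq_closed m (C k)) -> (forall k, C k (e k)) -> vcv m e p ->
  diam_to_zero m C -> supported m x -> supported m p -> x <> p ->
  exists del, 0 < del /\ forall k, ~ C k x -> forall y, C k y -> del <= dist m x y.
Proof.
  intros Hc He Hep Hdiam Hx Hp Hne.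
  set (r := dist m x p).
  assert (Hr : 0 < r).
  { pose proof (dist_nonneg m x p). destruct (Req_dec r 0) as [E | E]; [| unfold r in *; lra].
    exfalso. apply Hne. apply (dist_eq0 m); auto. }
  destruct (Hep (r / 4) ltac:(lra)) as [N1 HN1].
  destruct (Hdiam (r / 4) ltac:(lra)) as [N2 HN2].
  destruct (radius_min_finite (Nat.max N1 N2)
              (fun k del => ~ C k x -> forall y, C k y -> del <= dist m x y)) as [d0 [Hd0 H0]].
  { intros k a b Hab H Hn y Cy. specialize (H Hn y Cy). lra. }
  { intros k Hk. destruct (classic (C k x)) as [Ck | Ck].
    - exists 1. split; [lra |]. intro; contradiction.
    - destruct (seq_closed_dist_pos m (C k) x (Hc k) Ck Hx) as [del [Hdel H]]. eauto. }
  exists (Rmin d0 (r / 2)). split; [apply Rmin_pos; lra |].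
  intros k Hk y Cy. pose proof (Rmin_l d0 (r / 2)). pose proof (Rmin_r d0 (r / 2)).
  destruct (Compare_dec.lt_dec k (Nat.max N1 N2)) as [Hlt | Hge].
  - specialize (H0 k Hlt Hk y Cy). lra.
  - specialize (HN1 k ltac:(lia)). specialize (HN2 k ltac:(lia) y (e k) Cy (He k)).
    pose proof (dist_triangle m x y p). pose proof (dist_triangle m y (e k) p).
    unfold r in *. lra.
Qed.

Section Arc.
Variables (m : nat) (gamma : R -> pt).
Hypothesis Hgamma_supp : forall s, 0 <= s <= 1 -> supported m (gamma s).
Hypothesis Hgamma_cont : forall s, 0 <= s <= 1 -> forall eps, 0 < eps -> exists del, 0 < del /\
  forall s', 0 <= s' <= 1 -> Rabs (s - s') < del -> dist m (gamma s) (gamma s') < eps.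
Hypothesis Hgamma_inj : forall s s', 0 <= s <= 1 -> 0 <= s' <= 1 -> gamma s = gamma s' -> s = s'.

Lemma arc_vcv (u : nat -> R) v : (forall k, 0 <= u k <= 1) -> 0 <= v <= 1 -> Un_cv u v ->
  vcv m (fun k => gamma (u k)) (gamma v).
Proof.
  intros Hu Hv Huv e He. destruct (Hgamma_cont v Hv e He) as [del [Hdel H]].
  destruct (Huv del Hdel) as [N HN]. exists N. intros k Hk. rewrite dist_sym.
  apply H; auto. specialize (HN k Hk). unfold R_dist in HN. rewrite Rabs_minus_sym. auto.
Qed.

Lemma arc_seq_closed : seq_closed m (fun x => exists s, 0 <= s <= 1 /\ x = gamma s).
Proof.
  intros y x Hy Hyx Hx.
  destruct (choice _ Hy) as [u Hu].
  destruct (bounded_cv_subseq u 0 1) as [phi [v [Hphi [Hv Huv]]]]; [intro k; apply Hu |].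
  exists v. split; auto.
  assert (H1 : vcv m (fun k => gamma (u (phi k))) (gamma v)) by (apply arc_vcv; auto; intro; apply Hu).
  assert (H2 : vcv m (fun k => gamma (u (phi k))) x).
  { intros e He. destruct (Hyx e He) as [N HN]. exists N. intros k Hk.
    rewrite <- (proj2 (Hu (phi k))). apply HN. pose proof (strict_incr_ge phi Hphi k). lia. }
  apply (dist_eq0 m); auto. apply (vcv_unique _ _ _ _ H2 H1).
Qed.

Lemma arc_inverse_cont u : 0 <= u <= 1 -> forall e, 0 < e -> exists del, 0 < del /\
  forall u', 0 <= u' <= 1 -> dist m (gamma u) (gamma u') < del -> Rabs (u - u') < e.
Proof.
  intros Hu e He. apply NNPP. intro Hn.
  assert (Hall : forall k : nat, exists u',
             (0 <= u' <= 1 /\ dist m (gamma u) (gamma u') < / (INR k + 1)) /\ e <= Rabs (u - u')).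
  { intro k. apply NNPP. intro Hk. apply Hn. exists (/ (INR k + 1)). split; [apply inv_succ_pos |].
    intros u' Hu' Hd. destruct (Rle_lt_dec e (Rabs (u - u'))); auto. exfalso; apply Hk; eauto. }
  destruct (choice _ Hall) as [w Hw].
  destruct (bounded_cv_subseq w 0 1) as [phi [v [Hphi [Hv Hwv]]]]; [intro k; apply Hw |].
  assert (H1 : vcv m (fun k => gamma (w (phi k))) (gamma v)) by (apply arc_vcv; auto; intro; apply Hw).
  assert (H2 : vcv m (fun k => gamma (w (phi k))) (gamma u)).
  { intros e' He'. destruct (inv_succ_lt e' He') as [N HN]. exists N. intros k Hk.
    rewrite dist_sym. destruct (Hw (phi k)) as [[_ Hd] _].
    pose proof (HN (phi k) ltac:(pose proof (strict_incr_ge phi Hphi k); lia)). lra. }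
  assert (gamma u = gamma v) by (apply (dist_eq0 m); auto; apply (vcv_unique _ _ _ _ H2 H1)).
  apply Hgamma_inj in H; auto. subst v.
  destruct (Hwv e He) as [N HN]. specialize (HN N (le_n _)). unfold R_dist in HN.
  destruct (Hw (phi N)) as [_ Hge]. rewrite Rabs_minus_sym in Hge. lra.
Qed.

End Arc.

Section Cap.
Variables (k b : nat) (a : pt).
Hypothesis Ha : dot k b a a = 1.

Definition height (z : pt) : R := dot k b z a.

(* Write z = h a + z' with h = height z.  The collapse keeps h, scales z' by [cap_factor],
   and renormalises: the cap {h >= t} is sent to a, and for t = 1 nothing moves. *)
Definition cap_factor (t h : R) : R := Rmax 0 (t - h) / Rmax (1 - t) (t - h).
Definition cap_norm2 (t : R) (z : pt) : R :=
  height z ^ 2 + cap_factor t (height z) ^ 2 * (1 - height z ^ 2).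
Definition cap_vec (t : R) (z : pt) (i : nat) : R :=
  height z * a i + cap_factor t (height z) * (z i - height z * a i).
Definition cap_collapse (t : R) (z : pt) (i : nat) : R := cap_vec t z i / sqrt (cap_norm2 t z).

Lemma height_bound z : dot k b z z = 1 -> -1 <= height z <= 1.
Proof. intro Hz. pose proof (dot_cauchy_schwarz k b z a). rewrite Hz, Ha in H. unfold height. nra. Qed.

Lemma height_eq1 z : dot k b z z = 1 -> height z = 1 -> forall i, (k <= i < k + b)%nat -> z i = a i.
Proof.
  intros Hz Hs i Hi. unfold height in Hs.
  assert (sumsq k b (fun i => z i - a i) = 0) by (rewrite sumsq_dot, dot_sub_expand, Hz, Ha, Hs; ring).
  pose proof (sumsq_eq0 _ _ _ H i Hi). lra.
Qed.

Lemma cap_factor_range t h : 1/2 <= t <= 1 -> 0 <= cap_factor t h <= 1.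
Proof.
  intro Ht. unfold cap_factor.
  assert (0 <= Rmax 0 (t - h)) by apply Rmax_l.
  assert (Rmax 0 (t - h) <= Rmax (1 - t) (t - h)) by (unfold Rmax; repeat destruct Rle_dec; lra).
  destruct (Req_dec (Rmax (1 - t) (t - h)) 0) as [E | E].
  - rewrite E in *. replace (Rmax 0 (t - h)) with 0 by lra. unfold Rdiv. rewrite Rmult_0_l. lra.
  - assert (0 < Rmax (1 - t) (t - h)) by lra. split.
    + apply Rmult_le_pos; [lra |]. left; apply Rinv_0_lt_compat; lra.
    + apply Rmult_le_reg_r with (Rmax (1 - t) (t - h)); auto. unfold Rdiv.
      rewrite Rmult_assoc, Rinv_l by lra. lra.
Qed.

Lemma cap_factor_zero t h : t <= h -> cap_factor t h = 0.
Proof. intro H. unfold cap_factor. rewrite Rmax_left by lra. unfold Rdiv. ring. Qed.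

Lemma cap_factor_pos t h : 1/2 <= t <= 1 -> h < t -> 0 < cap_factor t h.
Proof.
  intros Ht H. unfold cap_factor. rewrite Rmax_right by lra.
  apply Rdiv_lt_0_compat; [lra |]. unfold Rmax; destruct Rle_dec; lra.
Qed.

Lemma cap_factor_one h : h < 1 -> cap_factor 1 h = 1.
Proof. intro H. unfold cap_factor. rewrite !Rmax_right by lra. field. lra. Qed.

Lemma cap_vec_dot t z : dot k b z z = 1 ->
  dot k b (cap_vec t z) (cap_vec t z) = cap_norm2 t z /\ dot k b (cap_vec t z) a = height z.
Proof.
  intro Hz. set (s := height z). set (be := cap_factor t s).
  assert (E : forall i, cap_vec t z i = (s - be * s) * a i + be * z i)
    by (intro i; unfold cap_vec; fold s be; ring).
  assert (Eza : dot k b a z = s) by (unfold s, height; apply dot_sym).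
  split.
  - rewrite (dot_ext k b _ (fun i => (s - be * s) * a i + be * z i) _
                         (fun i => (s - be * s) * a i + be * z i)) by (intros; rewrite !E; auto).
    rewrite dot_expand, Ha, Hz, Eza. unfold cap_norm2. fold s be. ring.
  - rewrite (dot_ext k b _ (fun i => (s - be * s) * a i + be * z i) a a)
      by (intros; rewrite !E; auto).
    rewrite dot_linl, Ha. unfold s, height. ring.
Qed.

Lemma cap_norm2_pos t z : 1/2 <= t <= 1 -> dot k b z z = 1 -> 0 < cap_norm2 t z <= 1.
Proof.
  intros Ht Hz. unfold cap_norm2. pose proof (height_bound z Hz). set (s := height z) in *.
  pose proof (cap_factor_range t s Ht). set (be := cap_factor t s) in *.
  assert (0 <= 1 - s ^ 2) by nra.
  assert (be ^ 2 <= 1) by nra.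
  split; [| nra].
  destruct (Rlt_dec s t) as [Hlt | Hge].
  - pose proof (cap_factor_pos t s Ht Hlt). fold be in H3.
    destruct (Req_dec s 0) as [-> | Hs]; [simpl; nra |].
    assert (0 < s ^ 2) by (simpl; nra). nra.
  - assert (0 < s ^ 2) by (simpl; nra). nra.
Qed.

Lemma cap_collapse_scale t z :
  dot k b (cap_collapse t z) (cap_collapse t z) =
    / sqrt (cap_norm2 t z) * / sqrt (cap_norm2 t z) * dot k b (cap_vec t z) (cap_vec t z) /\
  dot k b (cap_collapse t z) a = / sqrt (cap_norm2 t z) * dot k b (cap_vec t z) a.
Proof.
  set (c := / sqrt (cap_norm2 t z)).
  rewrite <- dot_scal2, <- dot_scall. unfold cap_collapse. split; apply dot_ext;
    intros; unfold c, Rdiv; split; ring.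
Qed.

Lemma cap_collapse_unit t z :
  1/2 <= t <= 1 -> dot k b z z = 1 -> dot k b (cap_collapse t z) (cap_collapse t z) = 1.
Proof.
  intros Ht Hz. destruct (cap_norm2_pos t z Ht Hz) as [HQ _].
  rewrite (proj1 (cap_collapse_scale t z)), (proj1 (cap_vec_dot t z Hz)).
  pose proof (sqrt_lt_R0 _ HQ). rewrite <- Rinv_mult, sqrt_sqrt by lra. field. lra.
Qed.

Lemma cap_collapse_height t z : 1/2 <= t <= 1 -> dot k b z z = 1 ->
  height (cap_collapse t z) = height z / sqrt (cap_norm2 t z).
Proof.
  intros Ht Hz. unfold height at 1.
  rewrite (proj2 (cap_collapse_scale t z)), (proj2 (cap_vec_dot t z Hz)). unfold Rdiv. ring.
Qed.

Lemma cap_collapse_cap t z : 1/2 <= t <= 1 -> t <= height z ->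
  forall i, cap_collapse t z i = a i.
Proof.
  intros Ht Hs i. unfold cap_collapse, cap_vec, cap_norm2. rewrite cap_factor_zero by auto.
  replace (height z ^ 2 + 0 ^ 2 * (1 - height z ^ 2)) with (height z ^ 2) by ring.
  rewrite sqrt_pow2 by lra. field. lra.
Qed.

Lemma cap_collapse_one z : dot k b z z = 1 ->
  forall i, (k <= i < k + b)%nat -> cap_collapse 1 z i = z i.
Proof.
  intros Hz i Hi. pose proof (height_bound z Hz). unfold cap_collapse, cap_vec, cap_norm2.
  destruct (Req_dec (height z) 1) as [E | E].
  - rewrite E, (height_eq1 z Hz E i Hi).
    replace (1 ^ 2 + cap_factor 1 1 ^ 2 * (1 - 1 ^ 2)) with 1 by ring. rewrite sqrt_1. field.
  - rewrite cap_factor_one by lra.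
    replace (height z ^ 2 + 1 ^ 2 * (1 - height z ^ 2)) with 1 by ring. rewrite sqrt_1. field.
Qed.

Lemma cap_collapse_closer t z : 1/2 <= t <= 1 -> dot k b z z = 1 -> 0 <= height z ->
  sumsq k b (fun i => cap_collapse t z i - a i) <= sumsq k b (fun i => z i - a i).
Proof.
  intros Ht Hz Hs. rewrite !sumsq_dot, !dot_sub_expand.
  rewrite cap_collapse_unit, Ha, Hz by auto. fold (height (cap_collapse t z)) (height z).
  rewrite cap_collapse_height by auto.
  destruct (cap_norm2_pos t z Ht Hz) as [HQ HQ1].
  assert (sqrt (cap_norm2 t z) <= 1) by (rewrite <- sqrt_1; apply sqrt_le_1_alt; auto).
  pose proof (sqrt_lt_R0 _ HQ).
  assert (height z <= height z / sqrt (cap_norm2 t z)).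
  { apply Rmult_le_reg_r with (sqrt (cap_norm2 t z)); auto. unfold Rdiv.
    rewrite Rmult_assoc, Rinv_l by lra. nra. }
  lra.
Qed.

End Cap.

Section Reflection.
Variables (k b : nat) (w : pt).

(* Reflection of the block in the hyperplane orthogonal to w; for w = 0 on the block the
   coefficient is a division by 0, i.e. 0, and [refl] is the identity. *)
Definition refl_coef (x : pt) : R := 2 * dot k b x w / dot k b w w.
Definition refl (x : pt) (i : nat) : R := x i - refl_coef x * w i.

Lemma dot_refl_w x : dot k b (refl x) w = - dot k b x w.
Proof.
  unfold refl. rewrite (dot_ext k b _ (fun i => 1 * x i + (- refl_coef x) * w i) w w)
    by (intros; split; ring).
  rewrite dot_linl. unfold refl_coef.
  destruct (Req_dec (dot k b w w) 0) as [E | E]; [| field; auto].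
  rewrite E, (dot_zero_r k b x w (dot_self_eq0 k b w E)).
  unfold Rdiv. ring.
Qed.

Lemma dot_refl_self x : dot k b (refl x) (refl x) = dot k b x x.
Proof.
  unfold refl.
  rewrite (dot_ext k b _ (fun i => 1 * x i + (- refl_coef x) * w i)
             _ (fun i => 1 * x i + (- refl_coef x) * w i)) by (intros; split; ring).
  rewrite dot_expand. unfold refl_coef.
  destruct (Req_dec (dot k b w w) 0) as [E | E]; [| field; auto].
  rewrite E, (dot_zero_r k b x w (dot_self_eq0 k b w E)).
  unfold Rdiv. ring.
Qed.

Lemma refl_involutive x y : (forall i, (k <= i < k + b)%nat -> y i = refl x i) ->
  forall i, (k <= i < k + b)%nat -> refl y i = x i.
Proof.
  intros Hy i Hi. unfold refl at 1.
  assert (refl_coef y = - refl_coef x).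
  { unfold refl_coef. rewrite (dot_ext k b y (refl x) w w) by (intros; split; auto).
    rewrite dot_refl_w. unfold Rdiv. ring. }
  rewrite H, Hy by auto. unfold refl. ring.
Qed.

End Reflection.

Lemma refl_swap k b p q : dot k b p p = 1 -> dot k b q q = 1 ->
  forall i, (k <= i < k + b)%nat -> refl k b (fun j => p j - q j) p i = q i.
Proof.
  intros Hp Hq i Hi. set (w := fun j => p j - q j).
  unfold refl, refl_coef.
  destruct (Req_dec (dot k b w w) 0) as [E | E].
  - assert (Hw : w i = 0) by (apply (dot_self_eq0 k b); auto).
    rewrite Hw. unfold w in Hw. lra.
  - assert (dot k b w w = 2 * dot k b p w).
    { unfold w. rewrite dot_sub_expand.
      rewrite (dot_ext k b p p (fun j => p j - q j) (fun j => 1 * p j + (-1) * q j))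
        by (intros; split; ring).
      rewrite (dot_sym k b p (fun j => 1 * p j + -1 * q j)), dot_linl, Hp, Hq, (dot_sym k b q p). ring. }
    replace (2 * dot k b p w / dot k b w w) with 1 by (rewrite H; field; lra).
    unfold w. ring.
Qed.

Section CapContinuity.
Variables (k b d : nat) (a : pt).
Hypothesis Hkb : (k + b <= d)%nat.
Hypothesis Ha : dot k b a a = 1.

Definition cap_dom (q : R * pt) : Prop := 1/2 <= fst q <= 1 /\ dot k b (snd q) (snd q) = 1.

Lemma cap_dom_coord_cont p i : (i < d)%nat -> cont_at (dist_prod d) cap_dom (fun q => snd q i) p.
Proof. intro Hi. apply (vcont_at_coord (dist_prod d) cap_dom d snd p i Hi). apply vcont_at_snd. Qed.

Lemma cap_dom_height_cont p : cont_at (dist_prod d) cap_dom (fun q => height k b a (snd q)) p.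
Proof.
  apply (cont_at_dot (dist_prod d) cap_dom k b snd (fun _ => a)).
  intros i Hi. split; [apply cap_dom_coord_cont; lia | apply cont_at_const].
Qed.

(* Away from (t, h) = (1, 1) the denominator of [cap_factor] does not vanish. *)
Lemma cap_collapse_cont_regular t z i : 1/2 <= t <= 1 -> dot k b z z = 1 ->
  ~ (t = 1 /\ height k b a z = 1) -> (k <= i < k + b)%nat ->
  cont_at (dist_prod d) cap_dom (fun q => cap_collapse k b a (fst q) (snd q) i) (t, z).
Proof.
  intros Ht Hz Hne Hi. pose proof (height_bound k b a Ha z Hz) as Hh.
  set (D := cap_dom). set (dp := dist_prod d).
  assert (Hden : 0 < Rmax (1 - t) (t - height k b a z)).
  { pose proof (Rmax_l (1 - t) (t - height k b a z)).
    pose proof (Rmax_r (1 - t) (t - height k b a z)).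
    destruct (Req_dec t 1) as [-> |]; [| lra].
    destruct (Req_dec (height k b a z) 1); [tauto | lra]. }
  assert (Hh_c := cap_dom_height_cont (t, z)). fold D dp in Hh_c.
  assert (Ht_c : cont_at dp D fst (t, z)) by apply cont_at_fst.
  assert (Hbeta : cont_at dp D (fun q => cap_factor (fst q) (height k b a (snd q))) (t, z)).
  { apply (cont_at_div dp D (fun q => Rmax 0 (fst q - height k b a (snd q)))
             (fun q => Rmax (1 - fst q) (fst q - height k b a (snd q)))); cbn [fst snd]; [lra | |].
    - apply (cont_at_max dp D (fun _ => 0)); [apply cont_at_const |].
      apply (cont_at_minus dp D fst); auto.
    - apply (cont_at_max dp D (fun q => 1 - fst q)); apply cont_at_minus; auto; apply cont_at_const. }
  assert (HQ : cont_at dp D (fun q => cap_norm2 k b a (fst q) (snd q)) (t, z)).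
  { unfold cap_norm2. apply cont_at_plus; [apply cont_at_pow2; auto |].
    apply cont_at_mult; [apply cont_at_pow2; auto |].
    apply cont_at_minus; [apply cont_at_const | apply cont_at_pow2; auto]. }
  destruct (cap_norm2_pos k b a Ha t z Ht Hz) as [HQp _].
  unfold cap_collapse, cap_vec.
  apply (cont_at_div dp D _ (fun q => sqrt (cap_norm2 k b a (fst q) (snd q)))).
  - cbn [fst snd]. pose proof (sqrt_lt_R0 _ HQp). lra.
  - apply cont_at_plus; [apply cont_at_mult; [auto | apply cont_at_const] |].
    apply cont_at_mult; auto.
    apply cont_at_minus; [apply cap_dom_coord_cont; lia |].
    apply cont_at_mult; [auto | apply cont_at_const].
  - apply (cont_at_sqrt dp D (fun q => cap_norm2 k b a (fst q) (snd q))); [cbn [fst snd]; lra | auto].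
Qed.

(* At (t, h) = (1, 1) the point is a itself, and [cap_collapse_closer] bounds the oscillation. *)
Lemma cap_collapse_cont_top z i : dot k b z z = 1 -> height k b a z = 1 ->
  (k <= i < k + b)%nat ->
  cont_at (dist_prod d) cap_dom (fun q => cap_collapse k b a (fst q) (snd q) i) (1, z).
Proof.
  intros Hz Hh Hi e He.
  destruct (cap_dom_height_cont (1, z) 1 ltac:(lra)) as [d1 [Hd1 H1]].
  exists (Rmin d1 e). split; [apply Rmin_pos; auto |].
  intros [t' z'] [Ht' Hz'] Hd. simpl in *.
  pose proof (Rmin_l d1 e). pose proof (Rmin_r d1 e).
  specialize (H1 (t', z') (conj Ht' Hz') ltac:(lra)). simpl in H1.
  assert (Hs' : 0 <= height k b a z') by (rewrite Hh in H1; apply Rabs_def2 in H1; lra).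
  rewrite (cap_collapse_one k b a Ha z Hz i Hi), (height_eq1 k b a Ha z Hz Hh i Hi), Rabs_minus_sym.
  eapply Rle_lt_trans; [apply (abs_coord_le_sqrt_sumsq k b (fun j => _ - a j) i Hi) |].
  eapply Rle_lt_trans; [apply sqrt_le_1_alt, (cap_collapse_closer k b a Ha t' z' Ht' Hz' Hs') |].
  rewrite (sumsq_ext k b (fun j => z' j - a j) (fun j => z' j - z j))
    by (intros j Hj; rewrite (height_eq1 k b a Ha z Hz Hh j Hj); auto).
  eapply Rle_lt_trans; [apply sqrt_le_1_alt, (sumsq_le_total k b d); auto |].
  fold (dist d z' z). rewrite dist_sym.
  pose proof (dist_prod_snd d (1, z) (t', z')). simpl in *. lra.
Qed.

Lemma cap_collapse_cont p : cap_dom p -> forall i, (k <= i < k + b)%nat ->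
  cont_at (dist_prod d) cap_dom (fun q => cap_collapse k b a (fst q) (snd q) i) p.
Proof.
  intros [Ht Hz] i Hi. destruct p as [t z]. simpl in *.
  destruct (classic (t = 1 /\ height k b a z = 1)) as [[-> Hh] | Hne].
  - apply cap_collapse_cont_top; auto.
  - apply cap_collapse_cont_regular; auto.
Qed.

End CapContinuity.

Lemma refl_cont k b d w (D : set) x i : (k + b <= d)%nat -> (i < d)%nat ->
  cont_at (dist d) D (fun y => refl k b w y i) x.
Proof.
  intros Hkb Hi. unfold refl, refl_coef.
  apply (cont_at_minus (dist d) D (fun y => y i)); [apply cont_at_coord; auto |].
  apply cont_at_mult; [| apply cont_at_const].
  unfold Rdiv. apply cont_at_mult; [| apply cont_at_const].
  apply cont_at_mult; [apply cont_at_const |].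
  apply (cont_at_dot (dist d) D k b (fun y => y) (fun _ => w)).
  intros j Hj. split; [apply cont_at_coord; lia | apply cont_at_const].
Qed.

Lemma height_cont k b d a (D : set) x : (k + b <= d)%nat -> cont_at (dist d) D (height k b a) x.
Proof.
  intro Hkb. apply (cont_at_dot (dist d) D k b (fun y => y) (fun _ => a)).
  intros j Hj. split; [apply cont_at_coord; lia | apply cont_at_const].
Qed.

(* The model S^(N-1) x ... x S^(N-1) (r factors) in R^(r N), the l-th factor on the
   coordinates l N, ..., l N + N - 1. *)
Definition sphere_pow (N r : nat) : set :=
  fun x => supported (r * N) x /\ forall l, (l < r)%nat -> sumsq (l * N) N x = 1.

Definition blockwise (N r : nat) (F : nat -> nat -> R) (out : nat -> R) (i : nat) : R :=
  if Compare_dec.lt_dec i (r * N) then F (i / N * N)%nat i else out i.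

Lemma block_of N r i : (i < r * N)%nat -> exists l, (l < r)%nat /\ (l * N <= i < l * N + N)%nat.
Proof.
  intro Hi. assert (HN : N <> 0%nat) by (intro; subst; lia).
  pose proof (Nat.div_mod i N HN). pose proof (Nat.mod_upper_bound i N HN).
  exists (i / N)%nat. nia.
Qed.

Lemma blockwise_in N r F out l i : (l < r)%nat -> (l * N <= i < l * N + N)%nat ->
  blockwise N r F out i = F (l * N)%nat i.
Proof.
  intros Hl Hi. unfold blockwise. destruct Compare_dec.lt_dec; [| nia].
  replace (i / N)%nat with l; [reflexivity |].
  apply (Nat.div_unique i N l (i - l * N)); lia.
Qed.

Lemma blockwise_out N r F out i : (r * N <= i)%nat -> blockwise N r F out i = out i.
Proof. intro Hi. unfold blockwise. destruct Compare_dec.lt_dec; [lia | reflexivity]. Qed.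

Lemma pt_eq_blocks N r (x y : pt) :
  (forall l i, (l < r)%nat -> (l * N <= i < l * N + N)%nat -> x i = y i) ->
  (forall i, (r * N <= i)%nat -> x i = y i) -> x = y.
Proof.
  intros Hin Hout. apply functional_extensionality. intro i.
  destruct (Compare_dec.lt_dec i (r * N)) as [Hi | Hi]; [| apply Hout; lia].
  destruct (block_of N r i Hi) as [l [Hl Hil]]. eauto.
Qed.

Section SpherePower.
Variables N r : nat.
Let M := sphere_pow N r.

Lemma sphere_pow_block x l : M x -> (l < r)%nat -> dot (l * N) N x x = 1.
Proof. intros [_ Hx] Hl. rewrite <- sumsq_dot. auto. Qed.

Lemma sphere_pow_intro x :
  supported (r * N) x -> (forall l, (l < r)%nat -> dot (l * N) N x x = 1) -> M x.
Proof. intros Hs Hx. split; auto. intros l Hl. rewrite sumsq_dot. auto. Qed.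

Lemma dot_blockwise F out l v : (l < r)%nat ->
  dot (l * N) N (blockwise N r F out) v = dot (l * N) N (F (l * N)%nat) v.
Proof. intro Hl. apply dot_ext. intros i Hi. split; [apply blockwise_in |]; auto. Qed.

Lemma sphere_pow_compact : seq_compact (r * N) M.
Proof.
  apply seq_compact_of_bounded_closed.
  - intros x Hx. split; [exact (proj1 Hx) |]. intros i Hi.
    destruct (block_of N r i Hi) as [l [Hl Hil]].
    apply (unit_coord_bound (l * N) N x i); [apply sphere_pow_block |]; auto.
  - intros z L Hz HL Hv. apply sphere_pow_intro; auto. intros l Hl.
    apply Un_cv_const_eq.
    apply (Un_cv_ext (fun j => dot (l * N) N (z j) (z j))); [intro j; apply sphere_pow_block; auto |].
    apply Un_cv_dot. intros i Hi. split; apply HL; nia.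
Qed.

(* Blockwise reflection in the hyperplane bisecting p and q. *)
Lemma sphere_pow_homogeneous p q : M p -> M q -> exists h, maps_into M M h /\
  cont_on (r * N) (r * N) M h /\ (forall x, M x -> h (h x) = x) /\ h p = q.
Proof.
  intros Hp Hq. set (w := fun j => p j - q j).
  set (h := fun x => blockwise N r (fun k => refl k N w x) x).
  exists h. split; [| split; [| split]].
  - intros x Hx. apply sphere_pow_intro.
    + intros i Hi. unfold h. rewrite blockwise_out by auto. apply (proj1 Hx); auto.
    + intros l Hl. unfold h. rewrite dot_blockwise, dot_sym, dot_blockwise by auto.
      rewrite dot_refl_self. apply sphere_pow_block; auto.
  - intros x Hx. apply vcont_at_of_coords. intros i Hi.
    destruct (block_of N r i Hi) as [l [Hl Hil]].
    apply (cont_at_ext _ _ _ (fun y => refl (l * N) N w y i)); auto.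
    + intros y _. unfold h. rewrite (blockwise_in N r _ _ l); auto.
    + apply refl_cont; nia.
  - intros x Hx. apply (pt_eq_blocks N r).
    + intros l i Hl Hi. unfold h at 1. rewrite (blockwise_in N r _ _ l) by auto.
      apply refl_involutive; auto. intros j Hj. unfold h. rewrite (blockwise_in N r _ _ l); auto.
    + intros i Hi. unfold h. rewrite !blockwise_out; auto.
  - apply (pt_eq_blocks N r).
    + intros l i Hl Hi. unfold h. rewrite (blockwise_in N r _ _ l) by auto.
      apply refl_swap; auto; apply sphere_pow_block; auto.
    + intros i Hi. unfold h. rewrite blockwise_out by auto.
      rewrite (proj1 Hp), (proj1 Hq); auto.
Qed.

End SpherePower.

Record cap_deformation (d : nat) (M : set) (a : pt) (s : pt -> R) (Sg : R -> pt -> pt) : Prop := {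
  cd_height_le1 : forall z, M z -> s z <= 1;
  cd_height_base : s a = 1;
  cd_height_eq1 : forall z, M z -> s z = 1 -> z = a;
  cd_height_cont : forall z, M z -> cont_at (dist d) M s z;
  cd_in : forall t z, 1/2 <= t <= 1 -> M z -> M (Sg t z);
  cd_cap : forall t z, 1/2 <= t <= 1 -> M z -> t <= s z -> Sg t z = a;
  cd_one : forall z, M z -> Sg 1 z = z;
  cd_cont : forall p, 1/2 <= fst p <= 1 -> M (snd p) ->
    vcont_at (dist_prod d) (fun q => 1/2 <= fst q <= 1 /\ M (snd q)) d (fun q => Sg (fst q) (snd q)) p
}.

Definition involutive_homogeneous (d : nat) (M : set) : Prop :=
  forall p q, M p -> M q -> exists h, maps_into M M h /\ cont_on d d M h /\
    (forall x, M x -> h (h x) = x) /\ h p = q.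

Record model_space (d : nat) (M : set) : Prop := {
  model_compact : seq_compact d M;
  model_homogeneous : involutive_homogeneous d M;
  model_cap_deformation : forall a, M a -> exists s Sg, cap_deformation d M a s Sg
}.

Fixpoint min_height (N : nat) (a : pt) (r : nat) (z : pt) : R :=
  match r with
  | O => 1
  | S r' => Rmin (min_height N a r' z) (height (r' * N) N a z)
  end.

Section MinHeight.
Variables (N : nat) (a : pt).

Lemma min_height_le1 r z : min_height N a r z <= 1.
Proof. induction r; simpl; [lra |]. pose proof (Rmin_l (min_height N a r z) (height (r * N) N a z)). lra. Qed.

Lemma min_height_le r z l : (l < r)%nat -> min_height N a r z <= height (l * N) N a z.
Proof.
  induction r; intro Hl; [lia |]. simpl.
  pose proof (Rmin_l (min_height N a r z) (height (r * N) N a z)).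
  pose proof (Rmin_r (min_height N a r z) (height (r * N) N a z)).
  destruct (Nat.eq_dec l r) as [-> | Hne]; [lra |]. pose proof (IHr ltac:(lia)). lra.
Qed.

Lemma min_height_eq1 r z : (forall l, (l < r)%nat -> height (l * N) N a z = 1) -> min_height N a r z = 1.
Proof.
  induction r; intro H; simpl; auto. rewrite IHr, H by (auto; intros; apply H; lia).
  apply Rmin_left. lra.
Qed.

Lemma min_height_cont {X} (d : X -> X -> R) (D : X -> Prop) (G : X -> pt) r x :
  (forall l, (l < r)%nat -> cont_at d D (fun y => height (l * N) N a (G y)) x) ->
  cont_at d D (fun y => min_height N a r (G y)) x.
Proof.
  induction r; intro H; simpl; [apply cont_at_const |].
  apply (cont_at_min d D (fun y => min_height N a r (G y))); [apply IHr; intros; apply H |]; auto.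
Qed.

End MinHeight.

Section SpherePowerDeformation.
Variables (N r : nat) (a : pt).
Let M := sphere_pow N r.
Hypothesis Ha : M a.

Definition block_collapse (t : R) (z : pt) : pt :=
  blockwise N r (fun k => cap_collapse k N a t z) (fun _ => 0).

Lemma block_collapse_in_block t z l i : (l < r)%nat -> (l * N <= i < l * N + N)%nat ->
  block_collapse t z i = cap_collapse (l * N) N a t z i.
Proof. intros Hl Hi. unfold block_collapse. rewrite (blockwise_in N r _ _ l); auto. Qed.

Lemma sphere_pow_height_le z l : M z -> (l < r)%nat -> height (l * N) N a z <= 1.
Proof.
  intros Hz Hl. apply (height_bound (l * N) N a); apply (sphere_pow_block N r); auto.
Qed.

Lemma sphere_pow_cap_deformation : cap_deformation (r * N) M a (min_height N a r) block_collapse.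
Proof.
  pose proof (sphere_pow_block N r a) as Hab.
  split.
  - intros; apply min_height_le1.
  - apply min_height_eq1. intros l Hl. unfold height. auto.
  - intros z Hz Hs. apply (pt_eq_blocks N r).
    + intros l i Hl Hi. pose proof (min_height_le N a r z l Hl).
      pose proof (sphere_pow_height_le z l Hz Hl).
      apply (height_eq1 (l * N) N a (Hab l Ha Hl) z); [apply (sphere_pow_block N r) | lra |]; auto.
    + intros i Hi. rewrite (proj1 Hz), (proj1 Ha); auto.
  - intros z Hz. apply (min_height_cont N a (dist (r * N)) M (fun y => y)).
    intros l Hl. apply height_cont. nia.
  - intros t z Ht Hz. apply sphere_pow_intro.
    + intros i Hi. unfold block_collapse. rewrite blockwise_out; auto.
    + intros l Hl. unfold block_collapse. rewrite dot_blockwise, dot_sym, dot_blockwise by auto.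
      apply (cap_collapse_unit (l * N) N a (Hab l Ha Hl) t z Ht (sphere_pow_block N r z l Hz Hl)).
  - intros t z Ht Hz Hs. apply (pt_eq_blocks N r).
    + intros l i Hl Hi. rewrite (block_collapse_in_block t z l i Hl Hi).
      apply (cap_collapse_cap (l * N) N a t z Ht).
      pose proof (min_height_le N a r z l Hl). lra.
    + intros i Hi. unfold block_collapse. rewrite blockwise_out by auto. rewrite (proj1 Ha); auto.
  - intros z Hz. apply (pt_eq_blocks N r).
    + intros l i Hl Hi. rewrite (block_collapse_in_block 1 z l i Hl Hi).
      apply (cap_collapse_one (l * N) N a (Hab l Ha Hl) z (sphere_pow_block N r z l Hz Hl) i Hi).
    + intros i Hi. unfold block_collapse. rewrite blockwise_out by auto. rewrite (proj1 Hz); auto.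
  - intros p Ht Hp. apply vcont_at_of_coords. intros i Hi.
    destruct (block_of N r i Hi) as [l [Hl Hil]].
    apply (cont_at_ext _ _ _ (fun q => cap_collapse (l * N) N a (fst q) (snd q) i));
      [intros; apply block_collapse_in_block; auto | split; auto |].
    apply (cont_at_restrict _ (cap_dom (l * N) N)).
    + intros q [Hq1 Hq2]. split; [| apply (sphere_pow_block N r)]; auto.
    + apply (cap_collapse_cont (l * N) N (r * N) a ltac:(nia) (Hab l Ha Hl)); auto.
      split; [| apply (sphere_pow_block N r)]; auto.
Qed.

End SpherePowerDeformation.

Lemma sphere_pow_model N r : model_space (r * N) (sphere_pow N r).
Proof.
  split.
  - apply sphere_pow_compact.
  - intros p q. apply sphere_pow_homogeneous.
  - intros a Ha. exists (min_height N a r), (block_collapse N r a).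
    apply sphere_pow_cap_deformation; auto.
Qed.

Lemma sphere_model n : model_space (n + 1) (sphere n).
Proof.
  replace (sphere n) with (sphere_pow (n + 1) 1).
  - replace (n + 1)%nat with (1 * (n + 1))%nat at 1 by lia. apply sphere_pow_model.
  - apply functional_extensionality. intro x. apply propositional_extensionality.
    unfold sphere, sphere_pow, supported. rewrite Nat.mul_1_l. split.
    + intros [Hs Hx]. split; [apply Hs | apply (Hx O)]; lia.
    + intros [Hs Hx]. split; auto. intros l Hl. replace l with O by lia. auto.
Qed.

Lemma sphere_prod_model n : model_space (2 * n + 2) (sphere_prod n).
Proof.
  replace (sphere_prod n) with (sphere_pow (n + 1) 2).
  - replace (2 * n + 2)%nat with (2 * (n + 1))%nat by lia. apply sphere_pow_model.
  - apply functional_extensionality. intro x. apply propositional_extensionality.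
    unfold sphere_prod, sphere_pow, supported.
    replace (2 * (n + 1))%nat with (2 * n + 2)%nat by lia. split.
    + intros [Hs Hx]. split; [| split]; auto; [apply (Hx O) | rewrite <- (Nat.mul_1_l (n + 1)) at 1; apply (Hx 1%nat)]; lia.
    + intros [Hs [H0 H1]]. split; auto. intros l Hl.
      destruct l as [| [| l]]; [| rewrite Nat.mul_1_l |]; auto; lia.
Qed.

Record homeo_pair (a : nat) (A : set) (b : nat) (B : set) (f g : pt -> pt) : Prop := {
  hp_into : maps_into A B f;
  hp_back : maps_into B A g;
  hp_cont : cont_on a b A f;
  hp_cont_inv : cont_on b a B g;
  hp_inv_l : forall x, A x -> g (f x) = x;
  hp_inv_r : forall y, B y -> f (g y) = y
}.

Arguments hp_into {a A b B f g}.
Arguments hp_back {a A b B f g}.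
Arguments hp_cont {a A b B f g}.
Arguments hp_cont_inv {a A b B f g}.
Arguments hp_inv_l {a A b B f g}.
Arguments hp_inv_r {a A b B f g}.

Lemma homeomorphic_pair a A b B : homeomorphic a A b B -> exists f g, homeo_pair a A b B f g.
Proof. intros (f & g & H1 & H2 & H3 & H4 & H5 & H6). exists f, g. split; auto. Qed.

Lemma homeo_pair_involution a A b B f g h :
  homeo_pair a A b B f g -> maps_into B B h -> cont_on b b B h -> (forall y, B y -> h (h y) = y) ->
  homeo_pair a A b B (fun x => h (f x)) (fun y => g (h y)).
Proof.
  intros Hfg HB Hh Hhh. split.
  - intros x Hx. apply HB, (hp_into Hfg); auto.
  - intros y Hy. apply (hp_back Hfg), HB; auto.
  - apply (cont_on_comp a b b A B); auto; [apply (hp_cont Hfg) | apply (hp_into Hfg)].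
  - apply (cont_on_comp b b a B B); auto. apply (hp_cont_inv Hfg).
  - intros x Hx. rewrite Hhh by (apply (hp_into Hfg); auto). apply (hp_inv_l Hfg); auto.
  - intros y Hy. rewrite (hp_inv_r Hfg) by (apply HB; auto). auto.
Qed.

Definition clamp (r : R) : R := Rmax 0 (Rmin 1 r).

Lemma clamp_range r : 0 <= clamp r <= 1.
Proof. unfold clamp, Rmax, Rmin; repeat destruct Rle_dec; lra. Qed.

Lemma clamp_id r : 0 <= r <= 1 -> clamp r = r.
Proof. intro H. unfold clamp, Rmax, Rmin; repeat destruct Rle_dec; lra. Qed.

Lemma cont_at_clamp {X} (d : X -> X -> R) D f x : cont_at d D f x -> cont_at d D (fun y => clamp (f y)) x.
Proof.
  intro H. unfold clamp. apply (cont_at_max d D (fun _ => 0)); [apply cont_at_const |].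
  apply (cont_at_min d D (fun _ => 1)); [apply cont_at_const | auto].
Qed.

Definition cap_level (t : R) : R := (1 + t) / 2.

Lemma cap_level_range t : 0 <= t <= 1 -> 1/2 <= cap_level t <= 1.
Proof. unfold cap_level; lra. Qed.

Lemma cont_at_cap_level m (D : R * pt -> Prop) p : cont_at (dist_prod m) D (fun q => cap_level (fst q)) p.
Proof.
  unfold cap_level, Rdiv. apply (cont_at_mult _ D (fun q => 1 + fst q) (fun _ => / 2)); [| apply cont_at_const].
  apply (cont_at_plus _ D (fun _ => 1)); [apply cont_at_const | apply cont_at_fst].
Qed.

Lemma vcont_at_comp_snd m (D : R * pt -> Prop) (C : set) k (G : pt -> pt) p :
  (forall q, D q -> C (snd q)) -> cont_on m k C G -> D p ->
  vcont_at (dist_prod m) D k (fun q => G (snd q)) p.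
Proof.
  intros HC HG Dp. apply (vcont_at_comp (dist_prod m) D (dist m) C snd); auto.
  - intros e He. exists e. split; auto. intros. pose proof (dist_prod_snd m p y). lra.
  - intros e He. apply HG; auto.
Qed.

Lemma cont_homotopy_of_vcont m (A : set) (H : R -> pt -> pt) :
  (forall p, 0 <= fst p <= 1 /\ A (snd p) ->
     vcont_at (dist_prod m) (fun q => 0 <= fst q <= 1 /\ A (snd q)) m (fun q => H (fst q) (snd q)) p) ->
  cont_homotopy m m A H.
Proof.
  intros Hc t x Ht Hx eps Heps.
  destruct (Hc (t, x) (conj Ht Hx) eps Heps) as [del [Hdel K]].
  exists del. split; auto. intros s0 y Hs Hy H1 H2.
  apply (K (s0, y) (conj Hs Hy)). unfold dist_prod. simpl. apply Rmax_lub_lt; auto.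
Qed.

Definition index_of (C : nat -> set) (y : pt) : nat :=
  match excluded_middle_informative (exists j, C j y) with
  | left H => proj1_sig (constructive_indefinite_description _ H)
  | right _ => O
  end.

Lemma index_of_spec C y : (exists j, C j y) -> C (index_of C y) y.
Proof.
  intro H. unfold index_of. destruct excluded_middle_informative as [H' | H']; [| contradiction].
  exact (proj2_sig (constructive_indefinite_description _ H')).
Qed.

Section WedgeBouquet.
Variable m : nat.
Variables (P Q : nat -> set) (gamma : R -> pt) (T : nat -> R) (dim : nat -> nat) (Mod : nat -> set).
Variables (phi phinv psi psinv : nat -> pt -> pt) (s : nat -> pt -> R) (Sg : nat -> R -> pt -> pt).

Definition arc : set := fun x => exists u, 0 <= u <= 1 /\ x = gamma u.
Definition wedge : set := fun x => exists j, P j x.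
Definition bouquet : set := fun y => arc y \/ exists j, Q j y.

Hypothesis HP_supp : forall j, inR m (P j).
Hypothesis HP_origin : forall j, P j origin.
Hypothesis HP_disj : forall j k x, j <> k -> P j x -> P k x -> x = origin.
Hypothesis HP_diam : diam_to_zero m P.
Hypothesis Hgamma_supp : forall u, 0 <= u <= 1 -> supported m (gamma u).
Hypothesis Hgamma_cont : forall u, 0 <= u <= 1 -> forall eps, 0 < eps -> exists del, 0 < del /\
  forall u', 0 <= u' <= 1 -> Rabs (u - u') < del -> dist m (gamma u) (gamma u') < eps.
Hypothesis Hgamma_inj : forall u u', 0 <= u <= 1 -> 0 <= u' <= 1 -> gamma u = gamma u' -> u = u'.
Hypothesis HT_0 : T 0%nat = 0.
Hypothesis HT_incr : forall j, T j < T (S j).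
Hypothesis HT_cv : Un_cv T 1.
Hypothesis HQ_supp : forall j, inR m (Q j).
Hypothesis HQ_base : forall j, Q j (gamma (T j)).
Hypothesis HQ_arc : forall j x, Q j x -> arc x -> x = gamma (T j).
Hypothesis HQ_disj : forall j k x, j <> k -> Q j x -> Q k x -> False.
Hypothesis HQ_diam : diam_to_zero m Q.
Hypothesis HMod_compact : forall j, seq_compact (dim j) (Mod j).
Hypothesis Hphi : forall j, homeo_pair m (P j) (dim j) (Mod j) (phi j) (phinv j).
Hypothesis Hpsi : forall j, homeo_pair m (Q j) (dim j) (Mod j) (psi j) (psinv j).
Hypothesis Hbase : forall j, psi j (gamma (T j)) = phi j origin.
Hypothesis Hcap : forall j, cap_deformation (dim j) (Mod j) (phi j origin) (s j) (Sg j).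

Lemma T_nonneg j : 0 <= T j.
Proof. induction j; [lra |]. pose proof (HT_incr j). lra. Qed.

Lemma T_mono j k : (j <= k)%nat -> T j <= T k.
Proof. intro H. induction H; [lra |]. pose proof (HT_incr m0). lra. Qed.

Lemma T_lt1 j : T j < 1.
Proof.
  apply Rlt_le_trans with (T (S j)); [apply HT_incr |].
  destruct (Rle_lt_dec (T (S j)) 1) as [| Hlt]; auto. exfalso.
  destruct (HT_cv (T (S j) - 1) ltac:(lra)) as [N HN].
  specialize (HN (Nat.max N (S j)) ltac:(lia)). unfold R_dist in HN.
  pose proof (T_mono (S j) (Nat.max N (S j)) ltac:(lia)). apply Rabs_def2 in HN. lra.
Qed.

Lemma T_range j : 0 <= T j <= 1.
Proof. pose proof (T_nonneg j); pose proof (T_lt1 j); lra. Qed.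

Definition arc_param (y : pt) : R :=
  match excluded_middle_informative (arc y) with
  | left H => proj1_sig (constructive_indefinite_description _ H)
  | right _ => 0
  end.

Lemma arc_param_spec y : arc y -> 0 <= arc_param y <= 1 /\ y = gamma (arc_param y).
Proof.
  intro H. unfold arc_param. destruct excluded_middle_informative as [H' | H']; [| contradiction].
  exact (proj2_sig (constructive_indefinite_description _ H')).
Qed.

Lemma arc_param_gamma u : 0 <= u <= 1 -> arc_param (gamma u) = u.
Proof.
  intro Hu. assert (arc (gamma u)) by (exists u; auto).
  destruct (arc_param_spec _ H) as [H1 H2]. apply Hgamma_inj; auto.
Qed.

Lemma arc_gamma u : 0 <= u <= 1 -> arc (gamma u).
Proof. intro Hu. exists u. auto. Qed.

Lemma arc_end_not_Q j : ~ Q j (gamma 1).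
Proof.
  intro H. pose proof (HQ_arc j _ H (arc_gamma 1 ltac:(lra))).
  apply Hgamma_inj in H0; [| lra | apply T_range]. pose proof (T_lt1 j). lra.
Qed.

Lemma cont_at_arc_param (D : R * pt -> Prop) p : (forall q, D q -> arc (snd q)) -> D p ->
  cont_at (dist_prod m) D (fun q => arc_param (snd q)) p.
Proof.
  intros HA Dp e He. destruct (arc_param_spec _ (HA p Dp)) as [Hu Eu].
  destruct (arc_inverse_cont m gamma Hgamma_supp Hgamma_cont Hgamma_inj _ Hu e He) as [del [Hdel H]].
  exists del. split; auto. intros q Dq Hq.
  destruct (arc_param_spec _ (HA q Dq)) as [Hu' Eu'].
  apply H; auto. rewrite <- Eu, <- Eu'. pose proof (dist_prod_snd m p q). lra.
Qed.

Definition base (j : nat) : pt := phi j origin.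

Lemma base_in j : Mod j (base j).
Proof. apply (hp_into (Hphi j)), HP_origin. Qed.

Lemma psinv_base j : psinv j (base j) = gamma (T j).
Proof. unfold base. rewrite <- Hbase. apply (hp_inv_l (Hpsi j)), HQ_base. Qed.

(* On the model of the j-th factor: the cap {s_j >= t} is spread along the arc from
   gamma (T j) towards gamma 1, the rest is collapsed by [Sg j t] and sent to Q j. *)
Definition to_bouquet (j : nat) (t : R) (z : pt) : pt :=
  if Rle_dec 0 (s j z - t) then gamma (T j + (1 - T j) * clamp (2 * (s j z - t)))
  else psinv j (Sg j t z).

Lemma arc_tail_range j c : 0 <= c <= 1 -> 0 <= T j + (1 - T j) * c <= 1.
Proof. intro Hc. pose proof (T_range j). split; nra. Qed.

Lemma to_bouquet_base j t : 1/2 <= t <= 1 ->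
  to_bouquet j t (base j) = gamma (T j + (1 - T j) * clamp (2 * (1 - t))).
Proof.
  intro Ht. unfold to_bouquet, base. rewrite (cd_height_base _ _ _ _ _ (Hcap j)).
  destruct Rle_dec; [auto | lra].
Qed.

Lemma to_bouquet_range j t z : 1/2 <= t <= 1 -> Mod j z ->
  Q j (to_bouquet j t z) \/ exists u, T j <= u <= 1 /\ to_bouquet j t z = gamma u.
Proof.
  intros Ht Hz. unfold to_bouquet. destruct Rle_dec.
  - right. eexists. split; [| reflexivity]. pose proof (clamp_range (2 * (s j z - t))).
    pose proof (T_range j). split; nra.
  - left. apply (hp_back (Hpsi j)), (cd_in _ _ _ _ _ (Hcap j)); auto.
Qed.

Lemma to_bouquet_in j t z : 1/2 <= t <= 1 -> Mod j z -> bouquet (to_bouquet j t z).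
Proof.
  intros Ht Hz. destruct (to_bouquet_range j t z Ht Hz) as [H | [u [Hu E]]]; [right; eauto |].
  left. exists u. split; auto. pose proof (T_range j); lra.
Qed.

Definition model_dom (j : nat) (q : R * pt) : Prop := 1/2 <= fst q <= 1 /\ Mod j (snd q).

Lemma to_bouquet_cont j p : model_dom j p ->
  vcont_at (dist_prod (dim j)) (model_dom j) m (fun q => to_bouquet j (fst q) (snd q)) p.
Proof.
  intros [Hp1 Hp2]. set (dp := dist_prod (dim j)). unfold to_bouquet.
  assert (Hs : cont_at dp (model_dom j) (fun q => s j (snd q)) p).
  { apply (cont_at_comp dp (model_dom j) (dist (dim j)) (Mod j) snd).
    - intros e He. exists e. split; auto. intros. pose proof (dist_prod_snd (dim j) p y). unfold dp in *. lra.
    - intros y [_ Hy]; auto.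
    - apply (cd_height_cont _ _ _ _ _ (Hcap j)); auto. }
  assert (Hg : cont_at dp (model_dom j) (fun q => s j (snd q) - fst q) p)
    by (apply cont_at_minus; [auto | apply cont_at_fst]).
  assert (Hu : cont_at dp (model_dom j) (fun q => T j + (1 - T j) * clamp (2 * (s j (snd q) - fst q))) p).
  { apply cont_at_plus; [apply cont_at_const |].
    apply cont_at_mult; [apply cont_at_const |].
    apply cont_at_clamp, cont_at_mult; [apply cont_at_const | auto]. }
  assert (HSg : vcont_at dp (model_dom j) (dim j) (fun q => Sg j (fst q) (snd q)) p)
    by exact ((cd_cont _ _ _ _ _ (Hcap j)) p Hp1 Hp2).
  apply (vcont_at_if dp (model_dom j) m (fun q => s j (snd q) - fst q)); [split; auto | auto | | |].
  - apply (vcont_at_comp dp (model_dom j) dist_real (fun u => 0 <= u <= 1) _ p Hu).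
    + intros y _. apply arc_tail_range, clamp_range.
    + intros e He. apply Hgamma_cont; auto. apply arc_tail_range, clamp_range.
  - apply (vcont_at_comp dp (model_dom j) (dist (dim j)) (Mod j) _ p HSg).
    + intros y [Hy1 Hy2]. apply (cd_in _ _ _ _ _ (Hcap j)); auto.
    + intros e He. apply (hp_cont_inv (Hpsi j)); auto. apply (cd_in _ _ _ _ _ (Hcap j)); auto.
  - intro H0. replace (2 * (s j (snd p) - fst p)) with 0 by lra.
    rewrite (cd_cap _ _ _ _ _ (Hcap j)) by (auto; lra). fold (base j). rewrite psinv_base.
    f_equal. rewrite clamp_id by lra. ring.
Qed.

Definition wedge_to_bouquet (x : pt) : pt :=
  if excluded_middle_informative (x = origin) then gamma 1
  else to_bouquet (index_of P x) (1/2) (phi (index_of P x) x).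

Definition bouquet_to_wedge (y : pt) : pt :=
  if excluded_middle_informative (arc y) then origin
  else phinv (index_of Q y) (psi (index_of Q y) y).

Definition wedge_homotopy (t : R) (x : pt) : pt :=
  if excluded_middle_informative (x = origin) then origin
  else phinv (index_of P x) (Sg (index_of P x) (cap_level t) (phi (index_of P x) x)).

Definition bouquet_homotopy (t : R) (y : pt) : pt :=
  if excluded_middle_informative (arc y) then gamma (1 - t * (1 - arc_param y))
  else to_bouquet (index_of Q y) (cap_level t) (psi (index_of Q y) y).

Lemma index_of_P j x : P j x -> x <> origin -> index_of P x = j.
Proof.
  intros H Hx. pose proof (index_of_spec P x (ex_intro _ j H)) as H'.
  destruct (Nat.eq_dec (index_of P x) j) as [| Hne]; auto.
  exfalso. apply Hx. apply (HP_disj _ _ _ Hne H' H).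
Qed.

Lemma index_of_Q j y : Q j y -> index_of Q y = j.
Proof.
  intros H. pose proof (index_of_spec Q y (ex_intro _ j H)) as H'.
  destruct (Nat.eq_dec (index_of Q y) j) as [| Hne]; auto.
  exfalso. apply (HQ_disj _ _ _ Hne H' H).
Qed.

Lemma wedge_to_bouquet_on j x : P j x -> wedge_to_bouquet x = to_bouquet j (1/2) (phi j x).
Proof.
  intro H. unfold wedge_to_bouquet. destruct excluded_middle_informative as [E | E].
  - subst x. fold (base j). rewrite to_bouquet_base by lra. f_equal.
    rewrite clamp_id by lra. field.
  - rewrite (index_of_P j x H E). auto.
Qed.

Lemma bouquet_to_wedge_on j y : Q j y -> bouquet_to_wedge y = phinv j (psi j y).
Proof.
  intro H. unfold bouquet_to_wedge. destruct excluded_middle_informative as [E | E].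
  - rewrite (HQ_arc j y H E), Hbase, (hp_inv_l (Hphi j)); auto.
  - rewrite (index_of_Q j y H). auto.
Qed.

Lemma bouquet_to_wedge_arc y : arc y -> bouquet_to_wedge y = origin.
Proof. intro H. unfold bouquet_to_wedge. destruct excluded_middle_informative; [auto | contradiction]. Qed.

Lemma wedge_homotopy_on j t x : P j x -> 0 <= t <= 1 ->
  wedge_homotopy t x = phinv j (Sg j (cap_level t) (phi j x)).
Proof.
  intros H Ht. pose proof (cap_level_range t Ht). unfold wedge_homotopy.
  destruct excluded_middle_informative as [E | E].
  - subst x. rewrite (cd_cap _ _ _ _ _ (Hcap j)); [rewrite (hp_inv_l (Hphi j)) | | apply base_in |]; auto.
    rewrite (cd_height_base _ _ _ _ _ (Hcap j)). lra.
  - rewrite (index_of_P j x H E). auto.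
Qed.

Lemma bouquet_homotopy_arc t y : arc y -> bouquet_homotopy t y = gamma (1 - t * (1 - arc_param y)).
Proof. intro H. unfold bouquet_homotopy. destruct excluded_middle_informative; [auto | contradiction]. Qed.

Lemma bouquet_homotopy_on j t y : Q j y -> 0 <= t <= 1 ->
  bouquet_homotopy t y = to_bouquet j (cap_level t) (psi j y).
Proof.
  intros H Ht. pose proof (cap_level_range t Ht). unfold bouquet_homotopy.
  destruct excluded_middle_informative as [E | E].
  - rewrite (HQ_arc j y H E), Hbase. fold (base j). rewrite to_bouquet_base by auto.
    rewrite arc_param_gamma by apply T_range. f_equal.
    unfold cap_level. rewrite clamp_id by lra. field.
  - rewrite (index_of_Q j y H). auto.
Qed.

Lemma P_closed j : seq_closed m (P j).
Proof.
  apply (seq_closed_homeo_image m (dim j) (Mod j) (P j) (phi j) (phinv j)); auto;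
    [apply (hp_into (Hphi j)) | apply (hp_back (Hphi j)) | apply (hp_cont_inv (Hphi j)) | apply (hp_inv_l (Hphi j))].
Qed.

Lemma Q_closed j : seq_closed m (Q j).
Proof.
  apply (seq_closed_homeo_image m (dim j) (Mod j) (Q j) (psi j) (psinv j)); auto;
    [apply (hp_into (Hpsi j)) | apply (hp_back (Hpsi j)) | apply (hp_cont_inv (Hpsi j)) | apply (hp_inv_l (Hpsi j))].
Qed.

Lemma arc_closed : seq_closed m arc.
Proof. apply (arc_seq_closed m gamma Hgamma_supp Hgamma_cont). Qed.

Lemma supported_origin : supported m origin.
Proof. intros i _. reflexivity. Qed.

Lemma bouquet_tail_near_end e : 0 < e -> exists N, forall k, (N <= k)%nat -> forall y,
  (Q k y \/ exists u, T k <= u <= 1 /\ y = gamma u) -> dist m y (gamma 1) < e.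
Proof.
  intro He.
  destruct (Hgamma_cont 1 ltac:(lra) (e / 2) ltac:(lra)) as [d1 [Hd1 H1]].
  destruct (HT_cv d1 Hd1) as [N1 HN1].
  destruct (HQ_diam (e / 2) ltac:(lra)) as [N2 HN2].
  exists (Nat.max N1 N2). intros k Hk y Hy.
  assert (HTk : Rabs (1 - T k) < d1).
  { specialize (HN1 k ltac:(lia)). unfold R_dist in HN1. rewrite Rabs_minus_sym. auto. }
  pose proof (T_range k).
  destruct Hy as [Hy | [u [Hu E]]].
  - specialize (HN2 k ltac:(lia) y (gamma (T k)) Hy (HQ_base k)).
    specialize (H1 (T k) H HTk). rewrite dist_sym in H1.
    pose proof (dist_triangle m y (gamma (T k)) (gamma 1)). lra.
  - subst y. rewrite dist_sym. apply Rlt_trans with (e / 2); [| lra]. apply H1; [lra |].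
    rewrite Rabs_right in HTk by lra. rewrite Rabs_right by lra. lra.
Qed.

Section Gluing.
Context {X : Type} (d : X -> X -> R) (D : X -> Prop) (pi : X -> pt) (F : X -> pt) (e : pt).
Hypothesis Hpi : forall x y, dist m (pi x) (pi y) <= d x y.

Lemma pieces_near (C : nat -> set) (p : pt) (c : nat -> pt) x :
  (forall k, seq_closed m (C k)) -> (forall k, C k (c k)) -> vcv m c p -> diam_to_zero m C ->
  supported m (pi x) -> supported m p -> pi x <> p ->
  exists del, 0 < del /\ forall y k, d x y < del -> C k (pi y) -> C k (pi x).
Proof.
  intros Hc Hck Hcv Hdiam Hx Hp Hne.
  destruct (dist_pos_shrinking_family m C p c (pi x) Hc Hck Hcv Hdiam Hx Hp Hne) as [d0 [Hd0 H0]].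
  exists d0. split; auto. intros y k Hy Hk. apply NNPP. intro Hn.
  specialize (H0 k Hn (pi y) Hk). specialize (Hpi x y). lra.
Qed.

Lemma vcont_at_tail_glue (C : nat -> set) x :
  (forall y, D y -> exists k, C k (pi y)) ->
  F x = e ->
  (forall eps, 0 < eps -> exists N, forall k, (N <= k)%nat -> forall y, D y -> C k (pi y) ->
     dist m (F y) e < eps) ->
  (forall eps, 0 < eps -> forall N, exists del, 0 < del /\ forall k, (k < N)%nat ->
     forall y, D y -> C k (pi y) -> d x y < del -> dist m (F x) (F y) < eps) ->
  vcont_at d D m F x.
Proof.
  intros Hcover Hx Htail Hhead eps Heps.
  destruct (Htail eps Heps) as [N HN]. destruct (Hhead eps Heps N) as [del [Hdel Hall]].
  exists del. split; auto. intros y Dy Hy. destruct (Hcover y Dy) as [k Hk].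
  destruct (Compare_dec.lt_dec k N); [apply (Hall k); auto |].
  rewrite Hx, dist_sym. apply (HN k); auto. lia.
Qed.

Lemma wedge_glue :
  (forall x, D x -> wedge (pi x)) ->
  (forall j x, D x -> P j (pi x) -> vcont_at d (fun y => D y /\ P j (pi y)) m F x) ->
  (forall x, D x -> pi x = origin -> F x = e) ->
  (forall eps, 0 < eps -> exists N, forall k, (N <= k)%nat -> forall y, D y -> P k (pi y) ->
     dist m (F y) e < eps) ->
  forall x, D x -> vcont_at d D m F x.
Proof.
  intros HD HP He Htail x Dx.
  destruct (classic (pi x = origin)) as [E | E].
  - apply (vcont_at_tail_glue P); auto. intros eps Heps N.
    apply (radius_min_finite N (fun k del => forall y, D y -> P k (pi y) -> d x y < del ->
             dist m (F x) (F y) < eps)).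
    + intros k a0 b0 Hab Hb y Dy Hy Hd. apply Hb; auto; lra.
    + intros k Hk. destruct (HP k x Dx ltac:(rewrite E; apply HP_origin) eps Heps) as [del [Hdel H]].
      exists del. split; auto.
  - destruct (HD x Dx) as [j Hj].
    destruct (pieces_near P origin (fun _ => origin) x P_closed HP_origin) as [d0 [Hd0 H0]]; auto.
    { intros eps Heps. exists O. intros. rewrite dist_refl. auto. }
    { exact (HP_supp j _ Hj). }
    { apply supported_origin. }
    apply (vcont_at_glue2 d D (fun y => P j (pi y)) (fun y => P j (pi y))); try apply HP; auto.
    exists d0. split; auto. intros y Dy Hy. left.
    destruct (HD y Dy) as [k Hk]. specialize (H0 y k Hy Hk).
    destruct (Nat.eq_dec k j) as [-> | Hne]; auto. exfalso. apply E, (HP_disj k j); auto.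
Qed.

Lemma bouquet_glue_end x :
  D x -> pi x = gamma 1 ->
  (forall y, D y -> bouquet (pi y)) ->
  vcont_at d (fun y => D y /\ arc (pi y)) m F x ->
  F x = e ->
  (forall eps, 0 < eps -> exists N, forall k, (N <= k)%nat -> forall y, D y -> Q k (pi y) ->
     dist m (F y) e < eps) ->
  vcont_at d D m F x.
Proof.
  intros Dx E HD HA He Htail eps Heps.
  destruct (Htail eps Heps) as [N HN].
  destruct (HA eps Heps) as [dA [HdA KA]].
  destruct (radius_min_finite N (fun k del => forall y, D y -> Q k (pi y) -> del <= dist m (pi x) (pi y)))
    as [del [Hdel Hall]].
  { intros k a0 b0 Hab Hb y Dy Hy. specialize (Hb y Dy Hy). lra. }
  { intros k Hk. rewrite E.
    destruct (seq_closed_dist_pos m (Q k) (gamma 1) (Q_closed k)) as [dk [Hdk Kk]];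
      [apply arc_end_not_Q | apply Hgamma_supp; lra |].
    exists dk. split; auto. }
  exists (Rmin dA del). split; [apply Rmin_pos; auto |].
  intros y Dy Hy. pose proof (Rmin_l dA del). pose proof (Rmin_r dA del).
  destruct (HD y Dy) as [Ay | [k Hk]]; [apply KA; auto; lra |].
  destruct (Compare_dec.lt_dec k N) as [Hlt | Hge].
  - specialize (Hall k Hlt y Dy Hk). specialize (Hpi x y). lra.
  - rewrite He, dist_sym. apply (HN k); auto. lia.
Qed.

Lemma bouquet_glue_away x :
  D x -> pi x <> gamma 1 ->
  (forall y, D y -> bouquet (pi y)) ->
  (arc (pi x) -> vcont_at d (fun y => D y /\ arc (pi y)) m F x) ->
  (forall j, Q j (pi x) -> vcont_at d (fun y => D y /\ Q j (pi y)) m F x) ->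
  vcont_at d D m F x.
Proof.
  intros Dx E HD HA HQ.
  assert (Hvx : supported m (pi x)).
  { destruct (HD x Dx) as [[u [Hu ->]] | [j Hj]]; [apply Hgamma_supp; auto | exact (HQ_supp j _ Hj)]. }
  destruct (pieces_near Q (gamma 1) (fun k => gamma (T k)) x Q_closed HQ_base) as [d0 [Hd0 H0]];
    auto; [apply (arc_vcv m gamma Hgamma_cont); auto; [intro; apply T_range | lra] | apply Hgamma_supp; lra |].
  assert (Hsame : forall j y k, Q j (pi x) -> d x y < d0 -> Q k (pi y) -> Q j (pi y)).
  { intros j y k Hj Hy Hk. specialize (H0 y k Hy Hk).
    destruct (Nat.eq_dec k j) as [-> | Hne]; auto. exfalso. apply (HQ_disj k j (pi x)); auto. }
  destruct (classic (arc (pi x))) as [HAx | HAx].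
  - destruct (classic (exists j, Q j (pi x))) as [[j Hj] | Hnq].
    + apply (vcont_at_glue2 d D (fun y => arc (pi y)) (fun y => Q j (pi y))); auto.
      exists d0. split; auto. intros y Dy Hy.
      destruct (HD y Dy) as [Ay | [k Hk]]; [left | right; apply (Hsame j y k)]; auto.
    + apply (vcont_at_glue2 d D (fun y => arc (pi y)) (fun y => arc (pi y))); auto.
      exists d0. split; auto. intros y Dy Hy. left.
      destruct (HD y Dy) as [Ay | [k Hk]]; auto. exfalso. apply Hnq. exists k. apply (H0 y k); auto.
  - destruct (HD x Dx) as [| [j Hj]]; [contradiction |].
    destruct (seq_closed_dist_pos m arc (pi x) arc_closed HAx Hvx) as [d1 [Hd1 H1]].
    apply (vcont_at_glue2 d D (fun y => Q j (pi y)) (fun y => Q j (pi y))); auto.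
    exists (Rmin d0 d1). split; [apply Rmin_pos; auto |]. intros y Dy Hy. left.
    pose proof (Rmin_l d0 d1). pose proof (Rmin_r d0 d1).
    destruct (HD y Dy) as [Ay | [k Hk]]; [| apply (Hsame j y k); auto; lra].
    specialize (H1 _ Ay). specialize (Hpi x y). lra.
Qed.

Lemma bouquet_glue :
  (forall x, D x -> bouquet (pi x)) ->
  (forall x, D x -> arc (pi x) -> vcont_at d (fun y => D y /\ arc (pi y)) m F x) ->
  (forall j x, D x -> Q j (pi x) -> vcont_at d (fun y => D y /\ Q j (pi y)) m F x) ->
  (forall x, D x -> pi x = gamma 1 -> F x = e) ->
  (forall eps, 0 < eps -> exists N, forall k, (N <= k)%nat -> forall y, D y -> Q k (pi y) ->
     dist m (F y) e < eps) ->
  forall x, D x -> vcont_at d D m F x.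
Proof.
  intros HD HA HQ He Htail x Dx. destruct (classic (pi x = gamma 1)) as [E | E].
  - apply bouquet_glue_end; auto. apply HA; auto. rewrite E. apply arc_gamma. lra.
  - apply bouquet_glue_away; auto.
Qed.

End Gluing.

Lemma phi_in j x : P j x -> Mod j (phi j x).
Proof. apply (hp_into (Hphi j)). Qed.

Lemma psi_in j y : Q j y -> Mod j (psi j y).
Proof. apply (hp_into (Hpsi j)). Qed.

Lemma wedge_to_bouquet_cont : forall x, wedge x -> vcont_at (dist m) wedge m wedge_to_bouquet x.
Proof.
  apply (wedge_glue (dist m) wedge (fun y => y) wedge_to_bouquet (gamma 1)); [intros; lra | auto | | |].
  - intros j x Sx Pjx.
    apply (vcont_at_ext _ _ m _ (fun y => to_bouquet j (1/2) (phi j y)));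
      [intros y [_ Hy]; apply wedge_to_bouquet_on; auto | split; auto |].
    refine (vcont_at_comp (dist m) _ (dist_prod (dim j)) (model_dom j) (fun y => (1/2, phi j y)) x _ _ m
             (fun q => to_bouquet j (fst q) (snd q)) _).
    + apply (dist_prod_pair_cont (dist m) _ (fun _ => 1/2) (phi j) (dim j) x); [apply cont_at_const |].
      intros e He. destruct (hp_cont (Hphi j) x Pjx e He) as [del [Hdel H]].
      exists del. split; auto. intros y [_ Hy] Hd. apply H; auto.
    + intros y [_ Hy]. split; [simpl; lra | apply phi_in; auto].
    + apply to_bouquet_cont. split; [simpl; lra | apply phi_in; auto].
  - intros x _ E. unfold wedge_to_bouquet. destruct excluded_middle_informative; [auto | contradiction].
  - intros eps Heps. destruct (bouquet_tail_near_end eps Heps) as [N HN]. exists N. intros k Hk y _ Hy.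
    rewrite (wedge_to_bouquet_on k y Hy). apply (HN k Hk), to_bouquet_range; [lra | apply phi_in; auto].
Qed.

Lemma bouquet_to_wedge_cont : forall y, bouquet y -> vcont_at (dist m) bouquet m bouquet_to_wedge y.
Proof.
  apply (bouquet_glue (dist m) bouquet (fun y => y) bouquet_to_wedge origin); [intros; lra | auto | | | |].
  - intros x Wx Ax. apply (vcont_at_ext _ _ m _ (fun _ => origin)); [| split; auto | apply vcont_at_const].
    intros y [_ Hy]. apply bouquet_to_wedge_arc; auto.
  - intros j x Wx Qx.
    apply (vcont_at_ext _ _ m _ (fun y => phinv j (psi j y)));
      [intros y [_ Hy]; apply bouquet_to_wedge_on; auto | split; auto |].
    refine (vcont_at_comp (dist m) _ (dist (dim j)) (Mod j) (psi j) x _ _ m (phinv j) _).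
    + intros e He. destruct (hp_cont (Hpsi j) x Qx e He) as [del [Hdel H]].
      exists del. split; auto. intros y [_ Hy] Hd. apply H; auto.
    + intros y [_ Hy]. apply psi_in; auto.
    + intros e He. apply (hp_cont_inv (Hphi j)); auto. apply psi_in; auto.
  - intros x _ E. apply bouquet_to_wedge_arc. rewrite E. apply arc_gamma. lra.
  - intros eps Heps. destruct (HP_diam eps Heps) as [N HN]. exists N. intros k Hk y _ Hy.
    rewrite (bouquet_to_wedge_on k y Hy). apply (HN k Hk); [| apply HP_origin].
    apply (hp_back (Hphi k)), psi_in; auto.
Qed.

Definition homotopy_dom (A : set) (p : R * pt) : Prop := 0 <= fst p <= 1 /\ A (snd p).

Lemma wedge_homotopy_cont : forall p, homotopy_dom wedge p ->
  vcont_at (dist_prod m) (homotopy_dom wedge) m (fun q => wedge_homotopy (fst q) (snd q)) p.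
Proof.
  apply (wedge_glue (dist_prod m) (homotopy_dom wedge) snd _ origin);
    [apply dist_prod_snd | intros x [_ Hx]; auto | | |].
  - intros j p [Hp1 Hp2] Pjp.
    apply (vcont_at_ext _ _ m _ (fun q => phinv j (Sg j (cap_level (fst q)) (phi j (snd q)))));
      [intros q [[Hq1 _] Hq]; apply wedge_homotopy_on; auto | split; auto; split; auto |].
    refine (vcont_at_comp (dist_prod m) _ (dist (dim j)) (Mod j)
             (fun q => Sg j (cap_level (fst q)) (phi j (snd q))) p _ _ m (phinv j) _).
    + refine (vcont_at_comp (dist_prod m) _ (dist_prod (dim j)) (model_dom j)
               (fun q => (cap_level (fst q), phi j (snd q))) p _ _ (dim j) (fun q => Sg j (fst q) (snd q)) _).
      * apply (dist_prod_pair_cont (dist_prod m) _ (fun q => cap_level (fst q)) (fun q => phi j (snd q))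
                 (dim j) p); [apply cont_at_cap_level |].
        apply (vcont_at_comp_snd _ _ (P j)); [intros q [_ Hq]; auto | apply (hp_cont (Hphi j)) |].
        split; auto. split; auto.
      * intros q [[Hq1 _] Hq]. split; [simpl; apply cap_level_range; auto | apply phi_in; auto].
      * apply (cd_cont _ _ _ _ _ (Hcap j)); [simpl; apply cap_level_range; auto | apply phi_in; auto].
    + intros q [[Hq1 _] Hq]. apply (cd_in _ _ _ _ _ (Hcap j)); [apply cap_level_range; auto | apply phi_in; auto].
    + intros e He. apply (hp_cont_inv (Hphi j)); auto.
      apply (cd_in _ _ _ _ _ (Hcap j)); [apply cap_level_range; auto | apply phi_in; auto].
  - intros p _ E. simpl. rewrite E. unfold wedge_homotopy.
    destruct excluded_middle_informative; [auto | contradiction].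
  - intros eps Heps. destruct (HP_diam eps Heps) as [N HN]. exists N. intros k Hk q [Hq1 _] Hq.
    rewrite (wedge_homotopy_on k (fst q) (snd q) Hq Hq1). apply (HN k Hk); [| apply HP_origin].
    apply (hp_back (Hphi k)), (cd_in _ _ _ _ _ (Hcap k)); [apply cap_level_range; auto | apply phi_in; auto].
Qed.

Lemma bouquet_homotopy_cont_arc p : homotopy_dom bouquet p -> arc (snd p) ->
  vcont_at (dist_prod m) (fun q => homotopy_dom bouquet q /\ arc (snd q)) m
    (fun q => bouquet_homotopy (fst q) (snd q)) p.
Proof.
  intros [Hp1 Hp2] Ap.
  apply (vcont_at_ext _ _ m _ (fun q => gamma (1 - fst q * (1 - arc_param (snd q)))));
    [intros q [_ Hq]; apply bouquet_homotopy_arc; auto | split; auto; split; auto |].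
  assert (Hc : cont_at (dist_prod m) (fun q => homotopy_dom bouquet q /\ arc (snd q))
                 (fun q => 1 - fst q * (1 - arc_param (snd q))) p).
  { apply cont_at_minus; [apply cont_at_const |].
    apply cont_at_mult; [apply cont_at_fst |].
    apply cont_at_minus; [apply cont_at_const |].
    apply cont_at_arc_param; [intros q [_ Hq]; auto | split; auto; split; auto]. }
  refine (vcont_at_comp (dist_prod m) _ dist_real (fun u => 0 <= u <= 1) _ p Hc _ m gamma _).
  - intros q [[Hq1 _] Hq]. destruct (arc_param_spec _ Hq) as [Hg _]. nra.
  - intros e He. apply Hgamma_cont; auto. destruct (arc_param_spec _ Ap) as [Hg _]. simpl. nra.
Qed.

Lemma bouquet_homotopy_cont : forall p, homotopy_dom bouquet p ->
  vcont_at (dist_prod m) (homotopy_dom bouquet) m (fun q => bouquet_homotopy (fst q) (snd q)) p.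
Proof.
  apply (bouquet_glue (dist_prod m) (homotopy_dom bouquet) snd _ (gamma 1));
    [apply dist_prod_snd | intros x [_ Hx]; auto | intros p Hp Ap; apply bouquet_homotopy_cont_arc; auto | | |].
  - intros j p [Hp1 Hp2] Qp.
    apply (vcont_at_ext _ _ m _ (fun q => to_bouquet j (cap_level (fst q)) (psi j (snd q))));
      [intros q [[Hq1 _] Hq]; apply bouquet_homotopy_on; auto | split; auto; split; auto |].
    refine (vcont_at_comp (dist_prod m) _ (dist_prod (dim j)) (model_dom j)
             (fun q => (cap_level (fst q), psi j (snd q))) p _ _ m (fun q => to_bouquet j (fst q) (snd q)) _).
    + apply (dist_prod_pair_cont (dist_prod m) _ (fun q => cap_level (fst q)) (fun q => psi j (snd q))
               (dim j) p); [apply cont_at_cap_level |].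
      apply (vcont_at_comp_snd _ _ (Q j)); [intros q [_ Hq]; auto | apply (hp_cont (Hpsi j)) |].
      split; auto. split; auto.
    + intros q [[Hq1 _] Hq]. split; [simpl; apply cap_level_range; auto | apply psi_in; auto].
    + apply to_bouquet_cont. split; [simpl; apply cap_level_range; auto | apply psi_in; auto].
  - intros p _ E. simpl. rewrite E, bouquet_homotopy_arc by (apply arc_gamma; lra).
    rewrite arc_param_gamma by lra. f_equal. ring.
  - intros eps Heps. destruct (bouquet_tail_near_end eps Heps) as [N HN]. exists N.
    intros k Hk q [Hq1 _] Hq.
    rewrite (bouquet_homotopy_on k (fst q) (snd q) Hq Hq1). apply (HN k Hk), to_bouquet_range;
      [apply cap_level_range; auto | apply psi_in; auto].
Qed.

Lemma cap_level_0 : cap_level 0 = 1/2.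
Proof. unfold cap_level. field. Qed.

Lemma cap_level_1 : cap_level 1 = 1.
Proof. unfold cap_level. field. Qed.

Lemma wedge_homotopic_id : homotopic_to_id m wedge (fun x => bouquet_to_wedge (wedge_to_bouquet x)).
Proof.
  exists wedge_homotopy. split; [| split; [| split]].
  - apply cont_homotopy_of_vcont. intros p Hp. apply wedge_homotopy_cont. exact Hp.
  - intros t x Ht [j Hj]. exists j. rewrite (wedge_homotopy_on j t x Hj Ht).
    apply (hp_back (Hphi j)), (cd_in _ _ _ _ _ (Hcap j)); [apply cap_level_range | apply phi_in]; auto.
  - intros x [j Hj]. rewrite (wedge_homotopy_on j 0 x Hj ltac:(lra)), cap_level_0, (wedge_to_bouquet_on j x Hj).
    pose proof (phi_in j x Hj) as Hz. unfold to_bouquet. destruct Rle_dec as [Hle | Hlt].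
    + rewrite bouquet_to_wedge_arc by (apply arc_gamma, arc_tail_range, clamp_range).
      rewrite (cd_cap _ _ _ _ _ (Hcap j)) by (auto; lra). apply (hp_inv_l (Hphi j)), HP_origin.
    + assert (HQ1 : Q j (psinv j (Sg j (1/2) (phi j x))))
        by (apply (hp_back (Hpsi j)), (cd_in _ _ _ _ _ (Hcap j)); auto; lra).
      rewrite (bouquet_to_wedge_on j _ HQ1), (hp_inv_r (Hpsi j)); auto.
      apply (cd_in _ _ _ _ _ (Hcap j)); auto; lra.
  - intros x [j Hj]. rewrite (wedge_homotopy_on j 1 x Hj ltac:(lra)), cap_level_1.
    rewrite (cd_one _ _ _ _ _ (Hcap j)) by (apply phi_in; auto). apply (hp_inv_l (Hphi j)); auto.
Qed.

Lemma bouquet_homotopy_0 y : bouquet y -> bouquet_homotopy 0 y = wedge_to_bouquet (bouquet_to_wedge y).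
Proof.
  intros Hy. destruct (classic (arc y)) as [Ay | nAy].
  - rewrite bouquet_homotopy_arc, bouquet_to_wedge_arc by auto. unfold wedge_to_bouquet.
    destruct excluded_middle_informative; [| contradiction]. f_equal. ring.
  - destruct Hy as [| [j Hj]]; [contradiction |].
    rewrite (bouquet_homotopy_on j 0 y Hj ltac:(lra)), cap_level_0, (bouquet_to_wedge_on j y Hj).
    assert (HP1 : P j (phinv j (psi j y))) by (apply (hp_back (Hphi j)), psi_in; auto).
    rewrite (wedge_to_bouquet_on j _ HP1), (hp_inv_r (Hphi j)); auto. apply psi_in; auto.
Qed.

Lemma bouquet_homotopy_1 y : bouquet y -> bouquet_homotopy 1 y = y.
Proof.
  intros Hy. destruct (classic (arc y)) as [Ay | nAy].
  - rewrite bouquet_homotopy_arc by auto. destruct (arc_param_spec _ Ay) as [_ Eg].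
    rewrite Eg at 2. f_equal. ring.
  - destruct Hy as [| [j Hj]]; [contradiction |].
    rewrite (bouquet_homotopy_on j 1 y Hj ltac:(lra)), cap_level_1.
    pose proof (psi_in j y Hj) as Hz. unfold to_bouquet. destruct Rle_dec as [Hle | Hlt].
    + pose proof (cd_height_le1 _ _ _ _ _ (Hcap j) _ Hz). assert (Hs : s j (psi j y) = 1) by lra.
      assert (Hy1 : y = gamma (T j)).
      { rewrite <- (hp_inv_l (Hpsi j) y Hj), (cd_height_eq1 _ _ _ _ _ (Hcap j) _ Hz Hs).
        apply psinv_base. }
      rewrite Hs, Hy1. replace (2 * (1 - 1)) with 0 by ring. rewrite clamp_id by lra. f_equal. ring.
    + rewrite (cd_one _ _ _ _ _ (Hcap j)) by auto. apply (hp_inv_l (Hpsi j)); auto.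
Qed.

Lemma bouquet_homotopic_id : homotopic_to_id m bouquet (fun y => wedge_to_bouquet (bouquet_to_wedge y)).
Proof.
  exists bouquet_homotopy. split; [| split; [| split]].
  - apply cont_homotopy_of_vcont. intros p Hp. apply bouquet_homotopy_cont. exact Hp.
  - intros t y Ht [Ay | [j Hj]].
    + rewrite bouquet_homotopy_arc by auto. left. destruct (arc_param_spec _ Ay) as [Hg _].
      apply arc_gamma. nra.
    + rewrite (bouquet_homotopy_on j t y Hj Ht). apply to_bouquet_in; [apply cap_level_range | apply psi_in]; auto.
  - apply bouquet_homotopy_0.
  - apply bouquet_homotopy_1.
Qed.

Theorem wedge_bouquet_homotopy_equivalent : homotopy_equivalent m wedge bouquet.
Proof.
  exists wedge_to_bouquet, bouquet_to_wedge. split; [| split; [| split; [| split; [| split]]]].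
  - intros x [j Hj]. rewrite (wedge_to_bouquet_on j x Hj). apply to_bouquet_in; [lra | apply phi_in; auto].
  - intros y [Ay | [j Hj]].
    + rewrite bouquet_to_wedge_arc by auto. exists O. apply HP_origin.
    + rewrite (bouquet_to_wedge_on j y Hj). exists j. apply (hp_back (Hphi j)), psi_in; auto.
  - exact wedge_to_bouquet_cont.
  - exact bouquet_to_wedge_cont.
  - apply wedge_homotopic_id.
  - apply bouquet_homotopic_id.
Qed.

End WedgeBouquet.

Section Choices.
Variables (m : nat) (dim : nat -> nat) (Mod : nat -> set).
Hypothesis Hmodel : forall j, model_space (dim j) (Mod j).

Lemma homeo_pair_choice (A : nat -> set) :
  (forall j, homeomorphic m (A j) (dim j) (Mod j)) ->
  exists f g : nat -> pt -> pt, forall j, homeo_pair m (A j) (dim j) (Mod j) (f j) (g j).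
Proof.
  intro H.
  assert (Hfg : forall j, exists fg : (pt -> pt) * (pt -> pt),
             homeo_pair m (A j) (dim j) (Mod j) (fst fg) (snd fg)).
  { intro j. destruct (homeomorphic_pair _ _ _ _ (H j)) as [f [g Hfg]]. exists (f, g). exact Hfg. }
  destruct (choice _ Hfg) as [fg Hfg']. exists (fun j => fst (fg j)), (fun j => snd (fg j)). auto.
Qed.

Lemma involution_choice (p q : nat -> pt) :
  (forall j, Mod j (p j)) -> (forall j, Mod j (q j)) ->
  exists h : nat -> pt -> pt, forall j, maps_into (Mod j) (Mod j) (h j) /\
    cont_on (dim j) (dim j) (Mod j) (h j) /\ (forall x, Mod j x -> h j (h j x) = x) /\ h j (p j) = q j.
Proof.
  intros Hp Hq. apply (choice (fun j h => maps_into (Mod j) (Mod j) h /\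
    cont_on (dim j) (dim j) (Mod j) h /\ (forall x, Mod j x -> h (h x) = x) /\ h (p j) = q j)).
  intro j. apply (model_homogeneous _ _ (Hmodel j)); auto.
Qed.

Lemma cap_deformation_choice (a : nat -> pt) : (forall j, Mod j (a j)) ->
  exists s Sg, forall j, cap_deformation (dim j) (Mod j) (a j) (s j) (Sg j).
Proof.
  intro Ha.
  assert (H : forall j, exists sS : (pt -> R) * (R -> pt -> pt),
             cap_deformation (dim j) (Mod j) (a j) (fst sS) (snd sS)).
  { intro j. destruct (model_cap_deformation _ _ (Hmodel j) (a j) (Ha j)) as [s [Sg H]].
    exists (s, Sg). exact H. }
  destruct (choice _ H) as [sS HsS]. exists (fun j => fst (sS j)), (fun j => snd (sS j)). auto.
Qed.

End Choices.

Theorem wedge_bouquet_of_models n (F : nat -> factor) :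
  (forall j, model_space (fst (F j)) (snd (F j))) ->
  forall S W, is_wedge n F S -> is_bouquet n F W -> homotopy_equivalent (2 * n + 2) S W.
Proof.
  intros Hmodel S W HS HW.
  destruct HS as (P & HP_supp & HP_homeo & HP_origin & HP_disj & HP_diam & HS).
  destruct HW as (gamma & T & Q & HW). cbv zeta in HW.
  destruct HW as (Hg_supp & Hg_cont & Hg_inj & HT0 & HT_incr & HT_cv & HQ_supp & HQ_homeo & HQ_base &
                  HQ_arc & HQ_disj & HQ_diam & HW).
  set (dim := fun j => fst (F j)). set (Mod := fun j => snd (F j)).
  destruct (homeo_pair_choice _ dim Mod P HP_homeo) as (phi & phinv & Hphi).
  destruct (homeo_pair_choice _ dim Mod Q HQ_homeo) as (psi & psinv & Hpsi).
  (* Move the point where Q j meets the arc onto the image of the wedge point. *)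
  destruct (involution_choice dim Mod Hmodel (fun j => psi j (gamma (T j))) (fun j => phi j origin))
    as (h & Hh); [intro j; apply (hp_into (Hpsi j)), HQ_base | intro j; apply (hp_into (Hphi j)), HP_origin |].
  destruct (cap_deformation_choice dim Mod Hmodel (fun j => phi j origin)) as (s & Sg & Hcap);
    [intro j; apply (hp_into (Hphi j)), HP_origin |].
  replace S with (wedge P) by (apply functional_extensionality; intro x;
                               apply propositional_extensionality; symmetry; apply HS).
  replace W with (bouquet Q gamma) by (apply functional_extensionality; intro x;
                                       apply propositional_extensionality; symmetry; apply HW).
  apply (wedge_bouquet_homotopy_equivalent _ P Q gamma T dim Mod phi phinv
           (fun j y => h j (psi j y)) (fun j z => psinv j (h j z)) s Sg); auto.
  - intro j. apply (model_compact _ _ (Hmodel j)).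
  - intro j. destruct (Hh j) as (H1 & H2 & H3 & _). apply homeo_pair_involution; auto.
  - intro j. apply (Hh j).
Qed.

Theorem proposition3p9 :
  forall n : nat, (1 <= n)%nat ->
    (forall S0 WS0 : set,
       is_wedge n (factors0 n) S0 -> is_bouquet n (factors0 n) WS0 ->
       homotopy_equivalent (2 * n + 2) S0 WS0) /\
    (forall S1 WS1 : set,
       is_wedge n (factors1 n) S1 -> is_bouquet n (factors1 n) WS1 ->
       homotopy_equivalent (2 * n + 2) S1 WS1).
Proof.
  intros n _. split; apply wedge_bouquet_of_models; intro j.
  - apply sphere_prod_model.
  - destruct j; [apply sphere_model | apply sphere_prod_model].
Qed.
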